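(* Let $P$ be a polynomial with integer coefficients and let $L$ be the differential operator $L=2\pi i\, P\!\left(\frac{1}{2\pi i}\frac{\partial}{\partial x}\right)$. Consider the initial value problem $L U(t,x)=U_t(t,x)$ with $U(0,x)=f(x)$, where $f$ is in class $\mathcal{D}$ (i.e. $f$ is integrable, periodic of period $1$, piecewise continuously differentiable, and $f(x)=\tfrac12\{f(x^+)+f(x^-)\}$ for all $x$), and where $U(t,x)$ is the solution given by the Fourier series $\sum_k c_k\, e(tP(k)+kx)$, $c_k$ being the Fourier coefficients of $f$ (with partial sums taken symmetrically, $\lim_{K\to\infty}\sum_{|k|\le K}$). Denote $$G(u,v;q)=\sum_{w \,(\mathrm{mod}\ q)} e_q\big(uP(w)-vw\big).$$ Then at the rational time $t=u/q$ (a reduced fraction) this series converges and $$U(t,x)=\frac{1}{q}\sum_{v\,(\mathrm{mod}\ q)} G(u,v;q)\, f\!\left(x+\frac{v}{q}\right).$$ Consequently, if $U(0,x)$ is piecewise constant, then $U(t,x)$ is piecewise constant in $x$ at all rational times $t$.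
   Context: Notation: $e(\xi)=e^{2\pi i\xi}$ and $e_q(\xi)=e(\xi/q)=e^{2\pi i\xi/q}$. Functions of class $\mathcal{D}$ have Fourier series converging pointwise to $f$ in the sense $f(x)=\lim_{K\to\infty}\sum_{|k|\le K}c_k e(kx)$. The Fourier modes $e(tP(k)+kx)$ solve $LU=U_t$, so $\sum_k c_k e(tP(k)+kx)$ is the $L^2$ (weak) solution of the initial value problem. *)

From Stdlib Require Import Reals ZArith List.
From Coquelicot Require Import Coquelicot.
Open Scope R_scope.

Definition e (xi : R) : C := (cos (2 * PI * xi), sin (2 * PI * xi)).

Definition e_q (q : Z) (xi : R) : C := e (xi / IZR q).

(* polynomial with integer coefficients, list of coefficients
   [a0; a1; ...; an] representing a0 + a1 X + ... + an X^n *)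
Fixpoint Peval (P : list Z) (k : Z) : Z :=
  match P with
  | nil => 0%Z
  | a :: P' => (a + k * Peval P' k)%Z
  end.

Definition Csum (l : list C) : C := fold_right Cplus (RtoC 0) l.

Definition residues (q : Z) : list Z := map Z.of_nat (seq 0 (Z.to_nat q)).

Definition symrange (K : nat) : list Z :=
  map (fun j => (Z.of_nat j - Z.of_nat K)%Z) (seq 0 (2 * K + 1)).

Definition right_lim (f : R -> C) (x : R) (l : C) : Prop :=
  filterlim f (at_right x) (locally l).
Definition left_lim (f : R -> C) (x : R) (l : C) : Prop :=
  filterlim f (at_left x) (locally l).

Definition piecewise_C1 (f : R -> C) : Prop :=
  exists (n : nat) (a : nat -> R),
    a 0%nat = 0 /\ a n = 1 /\
    (forall i, (i < n)%nat -> a i < a (S i)) /\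
    (forall i, (i < n)%nat ->
       exists f' : R -> C,
         (forall x, a i < x < a (S i) ->
            @is_derive R_AbsRing C_R_NormedModule f x (f' x) /\ continuous f' x) /\
         (exists l, right_lim f (a i) l) /\ (exists l, left_lim f (a (S i)) l) /\
         (exists l, right_lim f' (a i) l) /\ (exists l, left_lim f' (a (S i)) l)).

(* piecewise constant (for 1-periodic functions: on [0,1]) *)
Definition piecewise_constant (f : R -> C) : Prop :=
  exists (n : nat) (a : nat -> R),
    a 0%nat = 0 /\ a n = 1 /\
    (forall i, (i < n)%nat -> a i < a (S i)) /\
    (forall i, (i < n)%nat -> exists c : C, forall x, a i < x < a (S i) -> f x = c).

Definition class_D (f : R -> C) : Prop :=
  @ex_RInt C_R_CompleteNormedModule f 0 1 /\
  (forall x, f (x + 1) = f x) /\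
  piecewise_C1 f /\
  (forall x, exists lp lm, right_lim f x lp /\ left_lim f x lm /\
       f x = Cmult (RtoC (1/2)) (Cplus lp lm)).

Definition fourier_coeff (f : R -> C) (k : Z) : C :=
  @RInt C_R_CompleteNormedModule (fun x => Cmult (f x) (e (- (IZR k * x)))) 0 1.

Definition U_partial (P : list Z) (f : R -> C) (t x : R) (K : nat) : C :=
  Csum (map (fun k => Cmult (fourier_coeff f k)
                           (e (t * IZR (Peval P k) + IZR k * x))) (symrange K)).

Definition Gsum (P : list Z) (u v q : Z) : C :=
  Csum (map (fun w => e_q q (IZR (u * Peval P w - v * w))) (residues q)).

Definition U_rational (P : list Z) (f : R -> C) (u q : Z) (x : R) : C :=
  Cmult (RtoC (1 / IZR q))
    (Csum (map (fun v => Cmult (Gsum P u v q) (f (x + IZR v / IZR q))) (residues q))).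

From Stdlib Require Import Reals ZArith List.
From Coquelicot Require Import Coquelicot.
Open Scope R_scope.
From Stdlib Require Import Lra Lia FunctionalExtensionality Classical.

(* At the time [t = u/q], [e(t P(k))] depends only on [k mod q], since [P(k) = P(k mod q)]
   modulo [q]; expanding it in the characters [e(k v/q)] of [Z/qZ] gives
   [e(u P(k)/q) = (1/q) sum_v G(u,v;q) e(k v/q)]. Hence the [K]-th symmetric partial sum of
   [U(u/q, x)] equals [(1/q) sum_v G(u,v;q) S_K f(x + v/q)], where [S_K f] is the [K]-th
   symmetric partial sum of the Fourier series of [f]. Dirichlet's theorem gives
   [S_K f(y) -> (f(y+) + f(y-))/2 = f(y)] for [f] of class [D]: writing [S_K f] as a convolution
   with the Dirichlet kernel and folding it at [y], each half tends to a one-sided limit, by a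
   Riemann-Lebesgue estimate for piecewise Lipschitz functions away from [y] and by the bound
   [|D_K(z)| <= 1/z] near [y]. Finally, translates of a periodic piecewise constant function are
   piecewise constant, and so are their finite linear combinations. *)

Lemma ball_R (x r y : R) : ball x r y <-> Rabs (y - x) < r.
Proof. unfold ball; simpl; unfold AbsRing_ball, abs, minus, plus, opp; simpl; tauto. Qed.

Lemma continuous_affine (a b x : R) : continuous (fun y => a * y + b) x.
Proof.
  apply continuity_pt_filterlim, continuity_pt_plus.
  - apply continuity_pt_scal, continuity_pt_id.
  - apply continuity_pt_const; intros ? ?; reflexivity.
Qed.

Lemma continuous_cos_affine (a b x : R) : continuous (fun y => cos (a * y + b)) x.
Proof. apply continuous_cos_comp, continuous_affine. Qed.

Lemma continuous_sin_affine (a b x : R) : continuous (fun y => sin (a * y + b)) x.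
Proof. apply continuous_sin_comp, continuous_affine. Qed.

Lemma continuous_Rmult (f g : R -> R) x :
  continuous f x -> continuous g x -> continuous (fun y => f y * g y) x.
Proof. apply (@continuous_mult R_UniformSpace R_AbsRing). Qed.

Lemma ex_RInt_of_continuous (F : R -> R) c d :
  (forall z, continuous F z) -> ex_RInt F c d.
Proof. intros H; apply (@ex_RInt_continuous R_CompleteNormedModule); auto. Qed.

Lemma RInt_ext_open (f g : R -> R) a b : a <= b ->
  (forall x, a < x < b -> f x = g x) -> RInt f a b = RInt g a b.
Proof.
  intros Hab H. apply RInt_ext. intros x Hx.
  rewrite Rmin_left, Rmax_right in Hx by lra. apply H, Hx.
Qed.

Lemma RInt_ext_R (f g : R -> R) a b : (forall x, f x = g x) -> RInt f a b = RInt g a b.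
Proof. intros H. apply RInt_ext. intros x _. apply H. Qed.

Lemma Rabs_RInt_le_const (f : R -> R) a b M : a <= b -> ex_RInt f a b ->
  (forall x, a <= x <= b -> Rabs (f x) <= M) -> Rabs (RInt f a b) <= (b - a) * M.
Proof.
  intros Hab Hex HM.
  apply (@norm_RInt_le_const R_NormedModule f a b (RInt f a b) M Hab);
    [auto | apply (RInt_correct f a b Hex)].
Qed.

Lemma Rabs_mult_sin_le (x s B : R) : Rabs x <= B -> Rabs (x * sin s) <= B.
Proof.
  intros Hx. rewrite Rabs_mult.
  assert (Rabs (sin s) <= 1) by (apply Rabs_le, SIN_bound).
  pose proof (Rabs_pos x); pose proof (Rabs_pos (sin s)); nra.
Qed.

Definition Rlipschitz (L : R) (G : R -> R) : Prop :=
  forall y z, Rabs (G y - G z) <= L * Rabs (y - z).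

Lemma Rlipschitz_nonneg L G : Rlipschitz L G -> 0 <= L.
Proof.
  intros HL. specialize (HL 1 0). rewrite Rminus_0_r, Rabs_R1 in HL.
  pose proof (Rabs_pos (G 1 - G 0)); lra.
Qed.

Lemma Rlipschitz_continuous L G : Rlipschitz L G -> forall y, continuous G y.
Proof.
  intros HL y. apply filterlim_locally. intros eps.
  pose proof (Rlipschitz_nonneg L G HL).
  assert (Hd : 0 < eps / (L + 1)) by (apply Rdiv_lt_0_compat; [apply cond_pos | lra]).
  exists (mkposreal _ Hd). intros z Hz. apply ball_R in Hz; simpl in Hz.
  apply ball_R. specialize (HL z y).
  assert (L * Rabs (z - y) <= L * (eps / (L + 1)))
    by (apply Rmult_le_compat_l; [lra | apply Rlt_le; exact Hz]).
  assert ((L + 1) * (eps / (L + 1)) = eps) by (field; lra).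
  lra.
Qed.

Lemma Rlipschitz_shift L G t : Rlipschitz L G -> Rlipschitz L (fun y => G (y + t)).
Proof.
  intros HL y z. replace (y - z) with ((y + t) - (z + t)) by ring. apply HL.
Qed.

Lemma Rlipschitz_reflect L G : Rlipschitz L G -> Rlipschitz L (fun y => G (- y)).
Proof.
  intros HL y z. replace (y - z) with (- (- y - - z)) by ring. rewrite Rabs_Ropp. apply HL.
Qed.

Lemma Rlipschitz_mult G L B h Lh Bh :
  Rlipschitz L G -> (forall y, Rabs (G y) <= B) ->
  Rlipschitz Lh h -> (forall y, Rabs (h y) <= Bh) ->
  Rlipschitz (L * Bh + B * Lh) (fun y => G y * h y).
Proof.
  intros HG HGb Hh Hhb y z.
  replace (G y * h y - G z * h z) with ((G y - G z) * h y + G z * (h y - h z)) by ring.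
  eapply Rle_trans; [apply Rabs_triang|]. rewrite !Rabs_mult.
  pose proof (Rabs_pos (G y - G z)); pose proof (Rabs_pos (h y - h z)).
  pose proof (Rabs_pos (G z)); pose proof (Rabs_pos (h y)); pose proof (Rabs_pos (y - z)).
  specialize (HG y z); specialize (Hh y z); specialize (HGb z); specialize (Hhb y).
  apply Rle_trans with (L * Rabs (y - z) * Bh + B * (Lh * Rabs (y - z))); [|nra].
  apply Rplus_le_compat; apply Rmult_le_compat; auto.
Qed.

Definition clamp (a b y : R) : R := Rmax a (Rmin b y).

Lemma clamp_in a b y : a <= b -> a <= clamp a b y <= b.
Proof. intros; unfold clamp, Rmax, Rmin; repeat destruct Rle_dec; lra. Qed.

Lemma clamp_id a b y : a <= y <= b -> clamp a b y = y.
Proof. intros; unfold clamp, Rmax, Rmin; repeat destruct Rle_dec; lra. Qed.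

Lemma clamp_lipschitz a b : Rlipschitz 1 (clamp a b).
Proof.
  intros y z. rewrite Rmult_1_l. unfold clamp, Rmax, Rmin; repeat destruct Rle_dec;
  repeat match goal with |- context [Rabs ?x] =>
    destruct (Rcase_abs x); [rewrite (Rabs_left x) by lra | rewrite (Rabs_right x) by lra] end;
  lra.
Qed.

(** * Piecewise Lipschitz functions *)

(** Pieces may be degenerate, and [g] is unconstrained at the subdivision points. *)
Definition piecewise_lipschitz (c d : R) (g : R -> R) (L B : R) : Prop :=
  exists (m : nat) (p : nat -> R), p 0%nat = c /\ p m = d /\
    (forall j, (j < m)%nat -> p j <= p (S j)) /\
    forall j, (j < m)%nat -> exists G : R -> R,
      (forall y, p j < y < p (S j) -> G y = g y) /\
      Rlipschitz L G /\ (forall y, Rabs (G y) <= B).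

Lemma subdivision_le (p : nat -> R) m : (forall j, (j < m)%nat -> p j <= p (S j)) ->
  forall j k, (j <= k)%nat -> (k <= m)%nat -> p j <= p k.
Proof.
  intros H j k Hjk. induction Hjk; intros; [lra|].
  specialize (IHHjk ltac:(lia)). specialize (H m0 ltac:(lia)). lra.
Qed.

Lemma piecewise_lipschitz_point c g L B : piecewise_lipschitz c c g L B.
Proof. exists 0%nat, (fun _ => c). repeat split; intros; lia. Qed.

Lemma piecewise_lipschitz_ext c d g1 g2 L B :
  (forall y, g1 y = g2 y) -> piecewise_lipschitz c d g1 L B -> piecewise_lipschitz c d g2 L B.
Proof. intros H. replace g2 with g1 by (apply functional_extensionality; auto). auto. Qed.

Lemma piecewise_lipschitz_restrict c d g L B c' d' :
  piecewise_lipschitz c d g L B -> c <= c' -> c' <= d' -> d' <= d ->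
  piecewise_lipschitz c' d' g L B.
Proof.
  intros [m [p [H0 [Hm [Hmon Hp]]]]] H1 H2 H3.
  exists m, (fun j => clamp c' d' (p j)). split; [|split; [|split]].
  - rewrite H0; unfold clamp, Rmax, Rmin; repeat destruct Rle_dec; lra.
  - rewrite Hm; unfold clamp, Rmax, Rmin; repeat destruct Rle_dec; lra.
  - intros j Hj. specialize (Hmon j Hj). unfold clamp, Rmax, Rmin; repeat destruct Rle_dec; lra.
  - intros j Hj. destruct (Hp j Hj) as [G [HG1 HG2]]. exists G. split; auto.
    intros y Hy. apply HG1. unfold clamp, Rmax, Rmin in Hy; repeat destruct Rle_dec; lra.
Qed.

Lemma piecewise_lipschitz_concat c d e g L B :
  piecewise_lipschitz c d g L B -> piecewise_lipschitz d e g L B -> piecewise_lipschitz c e g L B.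
Proof.
  intros [m [p [H0 [Hm [Hmon Hp]]]]] [m' [p' [H0' [Hm' [Hmon' Hp']]]]].
  exists (m + m')%nat, (fun j => if (j <=? m)%nat then p j else p' (j - m)%nat).
  split; [|split; [|split]].
  - simpl. auto.
  - destruct (Nat.leb_spec (m + m') m).
    + assert (m' = 0%nat) by lia. subst m'. rewrite Nat.add_0_r. congruence.
    + replace (m + m' - m)%nat with m' by lia. auto.
  - intros j Hj. destruct (Nat.leb_spec j m); destruct (Nat.leb_spec (S j) m); try lia.
    + apply Hmon; lia.
    + assert (j = m) by lia. subst j. rewrite Nat.sub_succ_l, Nat.sub_diag by lia.
      rewrite Hm, <- H0'. apply Hmon'; lia.
    + rewrite Nat.sub_succ_l by lia. apply Hmon'; lia.
  - intros j Hj. destruct (Nat.leb_spec j m); destruct (Nat.leb_spec (S j) m); try lia.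
    + apply Hp; lia.
    + assert (j = m) by lia. subst j. rewrite Nat.sub_succ_l, Nat.sub_diag by lia.
      rewrite Hm, <- H0'. apply Hp'; lia.
    + rewrite Nat.sub_succ_l by lia. apply Hp'; lia.
Qed.

Lemma piecewise_lipschitz_shift c d g L B t : piecewise_lipschitz c d g L B ->
  piecewise_lipschitz (c - t) (d - t) (fun y => g (y + t)) L B.
Proof.
  intros [m [p [H0 [Hm [Hmon Hp]]]]].
  exists m, (fun j => p j - t). split; [|split; [|split]].
  - rewrite H0; auto.
  - rewrite Hm; auto.
  - intros j Hj; specialize (Hmon j Hj); lra.
  - intros j Hj. destruct (Hp j Hj) as [G [HG1 [HG2 HG3]]].
    exists (fun y => G (y + t)). split; [|split].
    + intros y Hy. apply HG1. lra.
    + apply Rlipschitz_shift, HG2.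
    + intros; apply HG3.
Qed.

Lemma piecewise_lipschitz_reflect c d g L B : piecewise_lipschitz c d g L B ->
  piecewise_lipschitz (-d) (-c) (fun y => g (- y)) L B.
Proof.
  intros [m [p [H0 [Hm [Hmon Hp]]]]].
  exists m, (fun j => - p (m - j)%nat). split; [|split; [|split]].
  - rewrite Nat.sub_0_r, Hm; auto.
  - rewrite Nat.sub_diag, H0; auto.
  - intros j Hj. replace (m - j)%nat with (S (m - S j)) by lia.
    specialize (Hmon (m - S j)%nat ltac:(lia)). lra.
  - intros j Hj. destruct (Hp (m - S j)%nat ltac:(lia)) as [G [HG1 [HG2 HG3]]].
    exists (fun y => G (- y)). split; [|split].
    + intros y Hy. apply HG1. replace (S (m - S j)) with (m - j)%nat in * by lia. lra.
    + apply Rlipschitz_reflect, HG2.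
    + intros; apply HG3.
Qed.

Lemma piecewise_lipschitz_sub_const c d g L B l : piecewise_lipschitz c d g L B ->
  piecewise_lipschitz c d (fun y => g y - l) L (B + Rabs l).
Proof.
  intros [m [p [H0 [Hm [Hmon Hp]]]]].
  exists m, p. repeat split; auto.
  intros j Hj. destruct (Hp j Hj) as [G [HG1 [HG2 HG3]]].
  exists (fun y => G y - l). split; [|split].
  - intros y Hy; rewrite HG1; auto.
  - intros y z. replace (G y - l - (G z - l)) with (G y - G z) by ring. apply HG2.
  - intros y. eapply Rle_trans; [apply Rabs_triang|]. rewrite Rabs_Ropp.
    specialize (HG3 y). lra.
Qed.

Lemma piecewise_lipschitz_mult c d g L B h Lh Bh :
  piecewise_lipschitz c d g L B -> Rlipschitz Lh h -> (forall y, Rabs (h y) <= Bh) ->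
  piecewise_lipschitz c d (fun y => g y * h y) (L * Bh + B * Lh) (B * Bh).
Proof.
  intros [m [p [H0 [Hm [Hmon Hp]]]]] Hh1 Hh2.
  exists m, p. repeat split; auto.
  intros j Hj. destruct (Hp j Hj) as [G [HG1 [HG2 HG3]]].
  exists (fun y => G y * h y). split; [|split].
  - intros y Hy; rewrite HG1; auto.
  - apply Rlipschitz_mult; auto.
  - intros y. rewrite Rabs_mult. apply Rmult_le_compat; auto using Rabs_pos.
Qed.

Lemma ex_RInt_piecewise_lipschitz_mult c d g L B h : piecewise_lipschitz c d g L B -> c <= d ->
  (forall y, continuous h y) -> ex_RInt (fun y => g y * h y) c d.
Proof.
  intros [m [p [H0 [Hm [Hmon Hp]]]]] Hcd Hh. rewrite <- H0, <- Hm.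
  assert (Hc : forall k, (k <= m)%nat -> ex_RInt (fun y => g y * h y) (p 0%nat) (p k)).
  { induction k; intros Hk; [apply ex_RInt_point|].
    apply (ex_RInt_Chasles _ _ (p k)); [apply IHk; lia|].
    destruct (Hp k ltac:(lia)) as [G [HG1 [HG2 _]]].
    apply (ex_RInt_ext (fun y => G y * h y)).
    + intros x Hx. rewrite Rmin_left, Rmax_right in Hx by (apply Hmon; lia).
      rewrite HG1; auto.
    + apply ex_RInt_of_continuous. intros z.
      apply continuous_Rmult; [apply (Rlipschitz_continuous L G HG2) | apply Hh]. }
  apply Hc; lia.
Qed.

Lemma piecewise_lipschitz_right_of c d g L B : piecewise_lipschitz c d g L B -> c < d ->
  exists delta, 0 < delta /\ forall y z, c < y < c + delta -> c < z < c + delta ->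
    Rabs (g y - g z) <= L * Rabs (y - z).
Proof.
  intros [m [p [H0 [Hm [Hmon Hp]]]]] Hcd.
  assert (Hmo := subdivision_le p m Hmon).
  assert (Hf : forall k, (k <= m)%nat -> p k > c ->
                exists j, (j < k)%nat /\ p j = c /\ p j < p (S j)).
  { induction k; intros Hk Hpk; [lra|].
    destruct (Rlt_le_dec c (p k)) as [Hlt|Hle].
    - destruct (IHk ltac:(lia) Hlt) as [j [Hj1 Hj2]]. exists j; split; [lia|auto].
    - exists k. assert (p 0%nat <= p k) by (apply Hmo; lia). split; [lia|]. split; lra. }
  destruct (Hf m ltac:(lia) ltac:(lra)) as [j [Hj [Hj1 Hj2]]].
  destruct (Hp j ltac:(lia)) as [G [HG1 [HG2 _]]].
  exists (p (S j) - c). split; [lra|]. intros y z Hy Hz.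
  rewrite <- !HG1 by lra. apply HG2.
Qed.

(** * The Riemann-Lebesgue estimate *)

Lemma continuous_lipschitz_mult_sin L G N x :
  Rlipschitz L G -> continuous (fun y => G y * sin (N * PI * y)) x.
Proof.
  intros HL. apply continuous_Rmult; [apply (Rlipschitz_continuous L G HL)|].
  apply (continuous_ext (fun y => sin ((N * PI) * y + 0))); [intros; f_equal; ring|].
  apply continuous_sin_affine.
Qed.

(** Shifting by half a period [1/N] changes the sign of [sin (N PI y)]. *)
Lemma RInt_mult_sin_half_period_shift G L N a b : Rlipschitz L G -> 0 < N ->
  RInt (fun w => G (w - / N) * sin (N * PI * w)) (a + / N) (b + / N)
  = - RInt (fun y => G y * sin (N * PI * y)) a b.
Proof.
  intros HL HN. set (h := / N).
  set (F2 := fun w => G (w - h) * sin (N * PI * w)).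
  assert (HF2 : forall c d, ex_RInt F2 c d).
  { intros c d. apply ex_RInt_of_continuous. intros z.
    apply (continuous_lipschitz_mult_sin L), Rlipschitz_shift, HL. }
  pose proof (RInt_comp_lin F2 1 h a b) as E.
  replace (1 * a + h) with (a + h) in E by ring. replace (1 * b + h) with (b + h) in E by ring.
  rewrite <- E by auto.
  rewrite <- (RInt_opp (fun y => G y * sin (N * PI * y)))
    by (apply ex_RInt_of_continuous; intros; apply (continuous_lipschitz_mult_sin L); auto).
  apply RInt_ext. intros y _. unfold F2.
  change (scal 1 ?x) with (1 * x).
  replace (1 * y + h - h) with y by ring.
  replace (N * PI * (1 * y + h)) with (N * PI * y + PI) by (unfold h; field; lra).
  rewrite neg_sin. unfold opp; simpl. ring.
Qed.

(** Averaging the integral with its half-period shift leaves two end pieces of length [1/N]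
    and the integral of a difference that is at most [L / N] by the Lipschitz bound. *)
Lemma RInt_mult_sin_average G L N a b : Rlipschitz L G -> 0 < N ->
  2 * RInt (fun y => G y * sin (N * PI * y)) a b
  = RInt (fun y => G y * sin (N * PI * y)) a (a + / N)
    + RInt (fun y => (G y - G (y - / N)) * sin (N * PI * y)) (a + / N) b
    - RInt (fun y => G (y - / N) * sin (N * PI * y)) b (b + / N).
Proof.
  intros HL HN. set (h := / N).
  set (F := fun y => G y * sin (N * PI * y)).
  set (F2 := fun w => G (w - h) * sin (N * PI * w)).
  assert (HF : forall c d, ex_RInt F c d).
  { intros; apply ex_RInt_of_continuous; intros; apply (continuous_lipschitz_mult_sin L); auto. }
  assert (HF2 : forall c d, ex_RInt F2 c d).
  { intros; apply ex_RInt_of_continuous; intros.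
    apply (continuous_lipschitz_mult_sin L), Rlipschitz_shift, HL. }
  assert (HJ : RInt F2 (a + h) (b + h) = - RInt F a b)
    by apply (RInt_mult_sin_half_period_shift G L N a b HL HN).
  rewrite <- (RInt_Chasles F2 (a + h) b (b + h)) in HJ by auto.
  rewrite (RInt_ext_R (fun y => (G y - G (y - h)) * sin (N * PI * y))
                      (fun y => minus (F y) (F2 y)))
    by (intros; unfold F, F2; change (minus ?x ?y) with (x - y); ring).
  rewrite (RInt_minus F F2) by auto. change (minus ?x ?y) with (x - y).
  rewrite <- (RInt_Chasles F a (a + h) b) in HJ |- * by auto.
  change (plus ?x ?y) with (x + y) in HJ |- *. lra.
Qed.

Lemma Rabs_RInt_lipschitz_mult_sin_le (G : R -> R) L B a b N :
  Rlipschitz L G -> (forall y, Rabs (G y) <= B) -> a <= b -> 0 < N ->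
  Rabs (RInt (fun y => G y * sin (N * PI * y)) a b) <= (2 * B + L * (b - a)) / N.
Proof.
  intros HL HB Hab HN.
  pose proof (Rlipschitz_nonneg L G HL).
  assert (HB0 : 0 <= B) by (pose proof (HB 0); pose proof (Rabs_pos (G 0)); lra).
  set (h := / N). assert (Hh : 0 < h) by (apply Rinv_0_lt_compat; auto).
  replace ((2 * B + L * (b - a)) / N) with ((2 * B + L * (b - a)) * h) by reflexivity.
  assert (Hex : forall G' c d, Rlipschitz L G' -> ex_RInt (fun y => G' y * sin (N * PI * y)) c d).
  { intros; apply ex_RInt_of_continuous; intros; apply (continuous_lipschitz_mult_sin L); auto. }
  assert (Hlip_shift := Rlipschitz_shift L G (- h) HL).
  destruct (Rle_lt_dec (b - a) h) as [Hsmall | Hbig].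
  { eapply Rle_trans;
      [apply Rabs_RInt_le_const; [lra | auto | intros; apply Rabs_mult_sin_le, HB]|].
    assert (0 <= L * (b - a)) by (apply Rmult_le_pos; lra). nra. }
  assert (H1 : Rabs (RInt (fun y => G y * sin (N * PI * y)) a (a + h)) <= (a + h - a) * B)
    by (apply Rabs_RInt_le_const; auto; try lra; intros; apply Rabs_mult_sin_le, HB).
  assert (H2 : Rabs (RInt (fun y => G (y - h) * sin (N * PI * y)) b (b + h)) <= (b + h - b) * B)
    by (apply Rabs_RInt_le_const; [lra | apply (Hex (fun y => G (y - h))), Hlip_shift |];
        intros; apply Rabs_mult_sin_le, HB).
  assert (HD : Rabs (RInt (fun y => (G y - G (y - h)) * sin (N * PI * y)) (a + h) b)
               <= (b - (a + h)) * (L * h)).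
  { apply Rabs_RInt_le_const; [lra | apply (ex_RInt_ext (fun y => G y * sin (N * PI * y)
                                          - G (y - h) * sin (N * PI * y))) |].
    - intros; simpl; ring.
    - apply (@ex_RInt_minus R_NormedModule);
        [apply Hex, HL | apply (Hex (fun y => G (y - h))), Hlip_shift].
    - intros x _. apply Rabs_mult_sin_le. eapply Rle_trans; [apply HL|].
      replace (x - (x - h)) with h by ring. rewrite Rabs_right by lra. lra. }
  assert (Habs : Rabs (2 * RInt (fun y => G y * sin (N * PI * y)) a b)
                 <= 2 * B * h + L * (b - a) * h).
  { rewrite (RInt_mult_sin_average G L N a b HL HN). fold h.
    eapply Rle_trans; [apply Rabs_triang|].
    eapply Rle_trans; [apply Rplus_le_compat_r, Rabs_triang|]. rewrite Rabs_Ropp.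
    assert (0 <= L * h * h) by (apply Rmult_le_pos; [apply Rmult_le_pos|]; lra). nra. }
  rewrite Rabs_mult, Rabs_right in Habs by lra.
  assert (0 <= B * h) by (apply Rmult_le_pos; lra).
  assert (0 <= L * (b - a) * h) by (apply Rmult_le_pos; [apply Rmult_le_pos|]; lra).
  lra.
Qed.

Lemma piecewise_lipschitz_riemann_lebesgue c d g L B : piecewise_lipschitz c d g L B -> c <= d ->
  exists C, forall N, 0 < N -> Rabs (RInt (fun y => g y * sin (N * PI * y)) c d) <= C / N.
Proof.
  intros [m [p [H0 [Hm [Hmon Hp]]]]] Hcd.
  exists (2 * B * INR m + L * (d - c)). intros N HN. rewrite <- H0, <- Hm.
  set (F := fun y => g y * sin (N * PI * y)).
  enough (Hc : forall k, (k <= m)%nat -> ex_RInt F (p 0%nat) (p k) /\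
     Rabs (RInt F (p 0%nat) (p k)) <= (2 * B * INR k + L * (p k - p 0%nat)) / N)
    by apply (Hc m ltac:(lia)).
  induction k; intros Hk.
  - split; [apply ex_RInt_point|]. rewrite RInt_point. unfold zero; simpl.
    rewrite Rabs_R0. replace (2 * B * 0 + L * (p 0%nat - p 0%nat)) with 0 by ring.
    unfold Rdiv; rewrite Rmult_0_l; lra.
  - destruct (IHk ltac:(lia)) as [IH1 IH2].
    destruct (Hp k ltac:(lia)) as [G [HG1 [HG2 HG3]]].
    assert (Hk1 : p k <= p (S k)) by (apply Hmon; lia).
    assert (Hpc : forall x, Rmin (p k) (p (S k)) < x < Rmax (p k) (p (S k)) ->
       G x * sin (N * PI * x) = F x).
    { intros x Hx. rewrite Rmin_left, Rmax_right in Hx by lra. unfold F; rewrite HG1; auto. }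
    assert (Hex : ex_RInt F (p k) (p (S k))).
    { apply (ex_RInt_ext (fun y => G y * sin (N * PI * y))); auto.
      apply ex_RInt_of_continuous. intros; apply (continuous_lipschitz_mult_sin L); auto. }
    split; [apply (ex_RInt_Chasles _ _ (p k)); auto|].
    rewrite <- (RInt_Chasles _ (p 0%nat) (p k) (p (S k))) by auto.
    rewrite <- (RInt_ext _ _ _ _ Hpc). change (plus ?x ?y) with (x + y).
    pose proof (Rabs_RInt_lipschitz_mult_sin_le G L B (p k) (p (S k)) N HG2 HG3 Hk1 HN).
    eapply Rle_trans; [apply Rabs_triang|].
    rewrite S_INR. unfold Rdiv in *.
    replace ((2 * B * (INR k + 1) + L * (p (S k) - p 0%nat)) * / N) with
      ((2 * B * INR k + L * (p k - p 0%nat)) * / N + (2 * B + L * (p (S k) - p k)) * / N) by ring.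
    apply Rplus_le_compat; auto.
Qed.

(** * The Dirichlet kernel *)

Lemma Rabs_sin_sub_le a b : Rabs (sin a - sin b) <= Rabs (a - b).
Proof.
  destruct (MVT.MVT_abs sin cos b a) as [c [Hc _]]; [intros; apply derivable_pt_lim_sin|].
  rewrite Hc. assert (Rabs (cos c) <= 1) by (apply Rabs_le, COS_bound).
  pose proof (Rabs_pos (a - b)). nra.
Qed.

Lemma sin_ge_cubic a : 0 <= a -> a <= PI -> a - a ^ 3 / 6 <= sin a.
Proof.
  intros H1 H2. destruct (SIN a H1 H2) as [H _].
  unfold sin_lb, sin_approx in H. cbn [sum_f_R0] in H. unfold sin_term in H.
  rewrite !INR_IZR_INZ in H.
  cbn [Nat.mul Nat.add Factorial.fact Z.of_nat PosDef.Pos.of_succ_nat PosDef.Pos.succ] in H.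
  assert (a <= 4) by (pose proof PI_4; lra).
  assert (a ^ 5 / 120 - a ^ 7 / 5040 >= 0).
  { assert (a ^ 7 = a ^ 5 * (a * a)) by ring. assert (0 <= a ^ 5) by (apply pow_le; lra).
    assert (a * a <= 16) by nra. unfold Rdiv. nra. }
  simpl pow in H. simpl pow. lra.
Qed.

Lemma sin_PI_mult_ge z : 0 <= z <= 1/2 -> z <= sin (PI * z).
Proof.
  intros Hz. pose proof PI_4. pose proof PI2_3_2.
  assert (0 <= PI * z) by nra. assert (PI * z <= PI) by nra.
  pose proof (sin_ge_cubic (PI * z) ltac:(lra) ltac:(lra)).
  assert (PI * z <= 2) by nra.
  assert ((PI * z) ^ 3 / 6 <= (PI * z) * (4/6)).
  { simpl. assert ((PI * z) * (PI * z) <= 4) by nra. nra. }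
  nra.
Qed.

(** [dirichlet_kernel K z = sum_{|k| <= K} e(k z)] (see [Csum_e_symrange]). *)
Fixpoint dirichlet_kernel (K : nat) (z : R) : R :=
  match K with
  | O => 1
  | S K' => dirichlet_kernel K' z + 2 * cos (2 * PI * INR (S K') * z)
  end.

Lemma dirichlet_kernel_mult_sin K z :
  dirichlet_kernel K z * sin (PI * z) = sin ((2 * INR K + 1) * PI * z).
Proof.
  induction K; cbn [dirichlet_kernel].
  - rewrite Rmult_1_l; f_equal; simpl; ring.
  - rewrite Rmult_plus_distr_r, IHK.
    replace ((2 * INR (S K) + 1) * PI * z) with (2 * PI * INR (S K) * z + PI * z) by ring.
    replace ((2 * INR K + 1) * PI * z) with (2 * PI * INR (S K) * z - PI * z)
      by (rewrite S_INR; ring).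
    rewrite sin_plus, sin_minus. ring.
Qed.

Lemma dirichlet_kernel_even K z : dirichlet_kernel K (- z) = dirichlet_kernel K z.
Proof.
  induction K; cbn [dirichlet_kernel]; auto. rewrite IHK.
  replace (2 * PI * INR (S K) * - z) with (- (2 * PI * INR (S K) * z)) by ring.
  rewrite cos_neg. auto.
Qed.

Lemma dirichlet_kernel_periodic K z : dirichlet_kernel K (z + 1) = dirichlet_kernel K z.
Proof.
  induction K; cbn [dirichlet_kernel]; auto. rewrite IHK. do 2 f_equal.
  replace (2 * PI * INR (S K) * (z + 1)) with (2 * PI * INR (S K) * z + 2 * INR (S K) * PI)
    by ring.
  apply cos_period.
Qed.

Lemma continuous_dirichlet_kernel K z : continuous (dirichlet_kernel K) z.
Proof.
  induction K; cbn [dirichlet_kernel]; [apply continuous_const|].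
  apply (@continuous_plus R_UniformSpace R_AbsRing R_NormedModule); auto.
  apply continuous_Rmult; [apply continuous_const|].
  apply (continuous_ext (fun y => cos (2 * PI * INR (S K) * y + 0))); [intros; f_equal; ring|].
  apply continuous_cos_affine.
Qed.

Lemma continuous_dirichlet_kernel_affine K a b y :
  continuous (fun z => dirichlet_kernel K (a * z + b)) y.
Proof.
  apply (continuous_comp (fun z => a * z + b)); [apply continuous_affine|].
  apply continuous_dirichlet_kernel.
Qed.

Lemma sin_INR_PI n : sin (INR n * PI) = 0.
Proof.
  induction n; [simpl; rewrite Rmult_0_l; apply sin_0|].
  rewrite S_INR. replace ((INR n + 1) * PI) with (INR n * PI + PI) by ring.
  rewrite neg_sin, IHn. ring.
Qed.

Lemma is_RInt_dirichlet_kernel_half K : is_RInt (dirichlet_kernel K) 0 (1/2) (1/2).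
Proof.
  induction K; cbn [dirichlet_kernel].
  - replace (1/2) with (scal (1/2 - 0) 1) at 2 by (change ((1/2 - 0) * 1 = 1/2); field).
    apply (@is_RInt_const R_NormedModule).
  - replace (1/2) with (plus (1/2) 0) at 2 by (change (1/2 + 0 = 1/2); ring).
    apply (is_RInt_plus (dirichlet_kernel K)); [exact IHK|].
    set (c := 2 * PI * INR (S K)).
    assert (Hc : c <> 0).
    { unfold c. pose proof PI_RGT_0. assert (0 < INR (S K)) by (apply lt_0_INR; lia). nra. }
    assert (H := is_RInt_derive (fun z => (2 / c) * sin (c * z)) (fun z => 2 * cos (c * z))
                   0 (1/2)).
    cbv beta in H. change (minus ?a ?b) with (a - b) in H.
    replace (2 / c * sin (c * (1 / 2)) - 2 / c * sin (c * 0)) with 0 in H.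
    2: { rewrite Rmult_0_r, sin_0. unfold c.
         replace (2 * PI * INR (S K) * (1/2)) with (INR (S K) * PI) by field.
         rewrite sin_INR_PI. ring. }
    apply H.
    + intros x _. auto_derive; auto. field; auto.
    + intros x _. apply continuous_Rmult; [apply continuous_const|].
      apply (continuous_ext (fun y => cos (c * y + 0))); [intros; f_equal; ring|].
      apply continuous_cos_affine.
Qed.

Lemma Rabs_dirichlet_kernel_le K z : 0 < z <= 1/2 -> Rabs (dirichlet_kernel K z) <= / z.
Proof.
  intros Hz. pose proof (sin_PI_mult_ge z ltac:(lra)) as Hs.
  assert (Hsp : 0 < sin (PI * z)) by lra.
  assert (E : dirichlet_kernel K z = sin ((2 * INR K + 1) * PI * z) / sin (PI * z)).
  { rewrite <- dirichlet_kernel_mult_sin. field. lra. }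
  rewrite E. unfold Rdiv. rewrite Rabs_mult, Rabs_inv, (Rabs_right (sin (PI * z))) by lra.
  assert (Rabs (sin ((2 * INR K + 1) * PI * z)) <= 1) by (apply Rabs_le, SIN_bound).
  assert (/ sin (PI * z) <= / z) by (apply Rinv_le_contravar; lra).
  assert (0 < / sin (PI * z)) by (apply Rinv_0_lt_compat; lra).
  pose proof (Rabs_pos (sin ((2 * INR K + 1) * PI * z))). nra.
Qed.

(** * Localisation of the Dirichlet integral *)

Lemma Rabs_sub_right_limit_le (g : R -> R) l L d :
  filterlim g (at_right 0) (locally l) -> 0 < d ->
  (forall y z, 0 < y < d -> 0 < z < d -> Rabs (g y - g z) <= L * Rabs (y - z)) ->
  forall z, 0 < z < d -> Rabs (g z - l) <= L * z.
Proof.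
  intros Hlim Hd HL z Hz.
  destruct (Rle_lt_dec (Rabs (g z - l)) (L * z)) as [H|H]; auto. exfalso.
  set (r := Rabs (g z - l) - L * z). assert (Hr : 0 < r) by (unfold r; lra).
  destruct (Hlim _ (locally_ball l (mkposreal _ Hr))) as [eta Heta].
  set (w := Rmin (eta / 2) (z / 2)).
  assert (Hw1 : 0 < w) by (unfold w; apply Rmin_glb_lt; pose proof (cond_pos eta); lra).
  assert (Hw2 : w < z) by (unfold w; pose proof (Rmin_r (eta / 2) (z / 2)); lra).
  assert (Hw3 : w < eta)
    by (unfold w; pose proof (Rmin_l (eta / 2) (z / 2)); pose proof (cond_pos eta); lra).
  assert (Hb : ball 0 eta w) by (apply ball_R; rewrite Rminus_0_r, Rabs_right; lra).
  pose proof (proj1 (ball_R _ _ _) (Heta w Hb Hw1)) as Hgw. simpl in Hgw.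
  specialize (HL z w Hz ltac:(lra)). rewrite (Rabs_right (z - w)) in HL by lra.
  assert (0 <= L) by (pose proof (Rabs_pos (g z - g w)); nra).
  assert (Rabs (g z - l) <= Rabs (g z - g w) + Rabs (g w - l)).
  { replace (g z - l) with ((g z - g w) + (g w - l)) by ring. apply Rabs_triang. }
  unfold r in Hgw. nra.
Qed.

Definition inv_sin_clamped (delta z : R) : R := / sin (PI * clamp delta (1/2) z).

Lemma sin_clamped_ge delta z : 0 < delta <= 1/2 ->
  0 < sin (PI * delta) <= sin (PI * clamp delta (1/2) z).
Proof.
  intros Hd. pose proof PI_RGT_0. pose proof (clamp_in delta (1/2) z ltac:(lra)).
  split; [apply sin_gt_0; nra|]. apply sin_incr_1; nra.
Qed.

Lemma Rabs_inv_sin_clamped_le delta z : 0 < delta <= 1/2 ->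
  Rabs (inv_sin_clamped delta z) <= / sin (PI * delta).
Proof.
  intros Hd. destruct (sin_clamped_ge delta z Hd). unfold inv_sin_clamped.
  rewrite Rabs_right by (left; apply Rinv_0_lt_compat; lra).
  apply Rinv_le_contravar; lra.
Qed.

Lemma inv_sin_clamped_lipschitz delta : 0 < delta <= 1/2 ->
  Rlipschitz (PI / (sin (PI * delta) * sin (PI * delta))) (inv_sin_clamped delta).
Proof.
  intros Hd y z. pose proof PI_RGT_0.
  destruct (sin_clamped_ge delta y Hd) as [Hs0 Hy]. destruct (sin_clamped_ge delta z Hd) as [_ Hz].
  unfold inv_sin_clamped. set (s0 := sin (PI * delta)) in *.
  set (sy := sin (PI * clamp delta (1/2) y)) in *. set (sz := sin (PI * clamp delta (1/2) z)) in *.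
  replace (/ sy - / sz) with ((sz - sy) / (sy * sz)) by (field; lra).
  unfold Rdiv. rewrite Rabs_mult, Rabs_inv, (Rabs_right (sy * sz)) by nra.
  assert (Hl : Rabs (sz - sy) <= PI * Rabs (y - z)).
  { unfold sz, sy. eapply Rle_trans; [apply Rabs_sin_sub_le|].
    rewrite <- Rmult_minus_distr_l, Rabs_mult, (Rabs_right PI) by lra.
    apply Rmult_le_compat_l; [lra|].
    rewrite <- Rabs_Ropp, Ropp_minus_distr, <- (Rmult_1_l (Rabs (y - z))).
    apply clamp_lipschitz. }
  assert (/ (sy * sz) <= / (s0 * s0)) by (apply Rinv_le_contravar; nra).
  assert (0 <= / (sy * sz)) by (left; apply Rinv_0_lt_compat; nra).
  pose proof (Rabs_pos (sz - sy)). pose proof (Rabs_pos (y - z)).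
  apply Rle_trans with (PI * Rabs (y - z) * / (s0 * s0)); [|right; field; lra].
  apply Rle_trans with (PI * Rabs (y - z) * / (sy * sz)); [apply Rmult_le_compat_r; auto|].
  apply Rmult_le_compat_l; [nra | auto].
Qed.

(** Near [0] the kernel is at most [1/z], which a Lipschitz bound [|g z| <= L z] absorbs. *)
Lemma Rabs_RInt_dirichlet_near_zero_le (g : R -> R) K delta L :
  0 < delta <= 1/2 -> ex_RInt (fun z => g z * dirichlet_kernel K z) 0 delta ->
  (forall z, 0 < z <= delta -> Rabs (g z) <= L * z) ->
  Rabs (RInt (fun z => g z * dirichlet_kernel K z) 0 delta) <= delta * L.
Proof.
  intros Hd Hex Hg. set (F := fun z => g z * dirichlet_kernel K z) in *.
  set (Ft := fun z => if Rle_dec z 0 then 0 else F z).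
  assert (Hext : forall x, Rmin 0 delta < x < Rmax 0 delta -> F x = Ft x).
  { intros x Hx. rewrite Rmin_left, Rmax_right in Hx by lra. unfold Ft.
    destruct (Rle_dec x 0); [lra | auto]. }
  rewrite (RInt_ext _ _ _ _ Hext). replace (delta * L) with ((delta - 0) * L) by ring.
  apply Rabs_RInt_le_const; [lra | apply (ex_RInt_ext F); auto |].
  intros x Hx. unfold Ft. destruct (Rle_dec x 0).
  - rewrite Rabs_R0. pose proof (Hg delta ltac:(lra)). pose proof (Rabs_pos (g delta)).
    assert (0 <= L * delta) by lra. nra.
  - unfold F. rewrite Rabs_mult.
    pose proof (Hg x ltac:(lra)). pose proof (Rabs_dirichlet_kernel_le K x ltac:(lra)).
    pose proof (Rabs_pos (g x)). pose proof (Rabs_pos (dirichlet_kernel K x)).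
    apply Rle_trans with (L * x * / x); [apply Rmult_le_compat; auto | right; field; lra].
Qed.

Lemma RInt_dirichlet_away_from_zero (g : R -> R) K delta : 0 < delta <= 1/2 ->
  RInt (fun z => g z * dirichlet_kernel K z) delta (1/2)
  = RInt (fun y => g y * inv_sin_clamped delta y * sin ((2 * INR K + 1) * PI * y)) delta (1/2).
Proof.
  intros Hd. apply RInt_ext_open; [lra|]. intros x Hx.
  unfold inv_sin_clamped. rewrite clamp_id by lra.
  assert (0 < sin (PI * x)) by (apply sin_gt_0; pose proof PI_RGT_0; nra).
  rewrite <- (dirichlet_kernel_mult_sin K x). field. lra.
Qed.

Lemma eventually_div_odd_lt C eps : 0 < eps ->
  exists K0, forall K, (K0 <= K)%nat -> C / (2 * INR K + 1) < eps.
Proof.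
  intros Heps. exists (Z.to_nat (up (C / eps))). intros K HK.
  set (N := 2 * INR K + 1). pose proof (pos_INR K).
  assert (HN : 0 < N) by (unfold N; lra).
  assert (HKC : C / eps < N).
  { destruct (archimed (C / eps)) as [Ha _].
    assert (IZR (up (C / eps)) <= INR K); [|unfold N; lra].
    destruct (Z_lt_le_dec (up (C / eps)) 0).
    - apply IZR_lt in l. lra.
    - rewrite <- (Z2Nat.id (up (C / eps))), <- INR_IZR_INZ by auto. apply le_INR, HK. }
  apply Rmult_lt_reg_r with (N / eps); [apply Rdiv_lt_0_compat; lra|].
  replace (C / N * (N / eps)) with (C / eps) by (field; lra).
  replace (eps * (N / eps)) with N by (field; lra). exact HKC.
Qed.

Lemma piecewise_lipschitz_right_limit_bound (psi : R -> R) l L B :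
  piecewise_lipschitz 0 (1/2) psi L B -> filterlim psi (at_right 0) (locally l) ->
  0 <= L /\ exists d0, 0 < d0 /\ forall z, 0 < z < d0 -> Rabs (psi z - l) <= L * z.
Proof.
  intros HPW Hlim.
  destruct (piecewise_lipschitz_right_of _ _ _ _ _ HPW ltac:(lra)) as [d0 [Hd0 HLip]].
  rewrite Rplus_0_l in HLip. split.
  - specialize (HLip (d0 / 2) (d0 / 4) ltac:(lra) ltac:(lra)).
    rewrite (Rabs_right (d0 / 2 - d0 / 4)) in HLip by lra.
    pose proof (Rabs_pos (psi (d0 / 2) - psi (d0 / 4))). nra.
  - exists d0. split; [auto|]. intros z Hz.
    apply (Rabs_sub_right_limit_le psi l L d0 Hlim Hd0); auto.
Qed.

Lemma exists_delta_mult_lt d0 L eps : 0 < d0 -> 0 <= L -> 0 < eps ->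
  exists delta, 0 < delta <= 1/2 /\ delta < d0 /\ delta * L < eps.
Proof.
  intros Hd0 HL Heps. exists (Rmin (d0 / 2) (Rmin (1/2) (eps / (L + 1)))).
  pose proof (Rmin_l (d0 / 2) (Rmin (1/2) (eps / (L + 1)))).
  pose proof (Rmin_r (d0 / 2) (Rmin (1/2) (eps / (L + 1)))).
  pose proof (Rmin_l (1/2) (eps / (L + 1))). pose proof (Rmin_r (1/2) (eps / (L + 1))).
  assert (0 < eps / (L + 1)) by (apply Rdiv_lt_0_compat; lra).
  assert (eps / (L + 1) * L < eps).
  { apply Rmult_lt_reg_r with (L + 1); [lra|].
    replace (eps / (L + 1) * L * (L + 1)) with (eps * L) by (field; lra). nra. }
  split; [split; [repeat apply Rmin_glb_lt; lra | lra]|]. split; [lra|].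
  eapply Rle_lt_trans; [|eauto]. apply Rmult_le_compat_r; lra.
Qed.

Lemma dirichlet_integral_right_limit (psi : R -> R) l L B :
  piecewise_lipschitz 0 (1/2) psi L B -> filterlim psi (at_right 0) (locally l) ->
  forall eps, 0 < eps -> exists K0, forall K, (K0 <= K)%nat ->
    Rabs (RInt (fun z => (psi z - l) * dirichlet_kernel K z) 0 (1/2)) < eps.
Proof.
  intros HPW Hlim eps Heps.
  set (g := fun z => psi z - l).
  assert (HPg := piecewise_lipschitz_sub_const _ _ _ _ _ l HPW).
  destruct (piecewise_lipschitz_right_limit_bound psi l L B HPW Hlim) as [HL0 [d0 [Hd0 Hgz]]].
  destruct (exists_delta_mult_lt d0 L (eps / 2) Hd0 HL0 ltac:(lra))
    as [delta [Hde [Hdd0 HdL]]].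
  assert (HPg2 := piecewise_lipschitz_mult _ _ _ _ _ _ _ _
     (piecewise_lipschitz_restrict _ _ _ _ _ delta (1/2) HPg ltac:(lra) ltac:(lra) ltac:(lra))
     (inv_sin_clamped_lipschitz delta Hde) (fun z => Rabs_inv_sin_clamped_le delta z Hde)).
  destruct (piecewise_lipschitz_riemann_lebesgue _ _ _ _ _ HPg2 ltac:(lra)) as [C HC].
  destruct (eventually_div_odd_lt C (eps / 2) ltac:(lra)) as [K0 HK0].
  exists K0. intros K HK.
  set (F := fun z => g z * dirichlet_kernel K z). change (Rabs (RInt F 0 (1/2)) < eps).
  assert (HFex : forall c, 0 <= c <= 1/2 -> ex_RInt F 0 c).
  { intros c Hc. apply (ex_RInt_piecewise_lipschitz_mult 0 c g L (B + Rabs l)); [|lra|].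
    - apply (piecewise_lipschitz_restrict 0 (1/2)); auto; lra.
    - apply continuous_dirichlet_kernel. }
  assert (HF2 : ex_RInt F delta (1/2))
    by (apply (@ex_RInt_Chasles_2 R_CompleteNormedModule _ 0); [lra | apply HFex; lra]).
  rewrite <- (RInt_Chasles F 0 delta (1/2)) by (auto; apply HFex; lra).
  change (plus ?a ?b) with (a + b).
  assert (HA : Rabs (RInt F 0 delta) <= delta * L).
  { apply Rabs_RInt_dirichlet_near_zero_le; [auto | apply HFex; lra |].
    intros z Hz. apply Hgz. lra. }
  unfold F. rewrite RInt_dirichlet_away_from_zero by auto.
  pose proof (HC (2 * INR K + 1) ltac:(pose proof (pos_INR K); lra)) as HB.
  pose proof (HK0 K HK).
  eapply Rle_lt_trans; [apply Rabs_triang|]. unfold F, g in *. cbv beta in *. lra.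
Qed.

(** * Dirichlet's theorem for real periodic functions *)

Lemma periodic_IZR (H : R -> R) : (forall y, H (y + 1) = H y) ->
  forall n y, H (y + IZR n) = H y.
Proof.
  intros Hp.
  assert (Hn : forall k y, H (y + INR k) = H y).
  { induction k; intros y; [simpl; rewrite Rplus_0_r; auto|].
    rewrite S_INR. replace (y + (INR k + 1)) with ((y + INR k) + 1) by ring. rewrite Hp; auto. }
  intros n y. destruct (Z_lt_le_dec n 0).
  - replace (IZR n) with (- INR (Z.to_nat (- n)))
      by (rewrite INR_IZR_INZ, Z2Nat.id, opp_IZR by lia; ring).
    rewrite <- (Hn (Z.to_nat (- n)) (y + - INR (Z.to_nat (- n)))). f_equal; ring.
  - replace (IZR n) with (INR (Z.to_nat n)) by (rewrite INR_IZR_INZ, Z2Nat.id by lia; auto).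
    auto.
Qed.

Lemma RInt_periodic_shift_IZR (H : R -> R) : (forall y, H (y + 1) = H y) ->
  (forall c d, ex_RInt H c d) -> forall n c d, RInt H (c + IZR n) (d + IZR n) = RInt H c d.
Proof.
  intros Hp Hex n c d.
  pose proof (RInt_comp_lin H 1 (IZR n) c d) as E.
  replace (1 * c + IZR n) with (c + IZR n) in E by ring.
  replace (1 * d + IZR n) with (d + IZR n) in E by ring.
  rewrite <- E by auto. apply RInt_ext. intros y _.
  change (scal 1 ?a) with (1 * a). rewrite Rmult_1_l.
  replace (1 * y + IZR n) with (y + IZR n) by ring. apply periodic_IZR; auto.
Qed.

Lemma RInt_periodic_translate (H : R -> R) : (forall y, H (y + 1) = H y) ->
  (forall c d, ex_RInt H c d) -> forall a, RInt H a (a + 1) = RInt H 0 1.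
Proof.
  intros Hp Hex a.
  set (n := (up a - 1)%Z). set (r := a - IZR n).
  rewrite <- (RInt_Chasles H a (IZR n + 1) (a + 1)) by auto.
  replace a with (r + IZR n) at 1 by (unfold r; ring).
  replace (IZR n + 1) with (1 + IZR n) at 1 by ring.
  rewrite RInt_periodic_shift_IZR by auto.
  replace (IZR n + 1) with (0 + IZR (n + 1)) by (rewrite plus_IZR; ring).
  replace (a + 1) with (r + IZR (n + 1)) by (unfold r; rewrite plus_IZR; ring).
  rewrite RInt_periodic_shift_IZR by auto.
  change (plus ?x ?y) with (x + y). rewrite Rplus_comm.
  exact (RInt_Chasles H 0 r 1 (Hex _ _) (Hex _ _)).
Qed.

Lemma filterlim_at_right_shift (phi : R -> R) x l :
  filterlim phi (at_right x) (locally l) ->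
  filterlim (fun z => phi (x + z)) (at_right 0) (locally l).
Proof.
  intros Hl P HP. destruct (Hl P HP) as [e He]. exists e. intros y Hy Hy0. apply He.
  - apply ball_R. apply ball_R in Hy. replace (x + y - x) with (y - 0) by ring. auto.
  - lra.
Qed.

Lemma filterlim_at_left_reflect (phi : R -> R) x l :
  filterlim phi (at_left x) (locally l) ->
  filterlim (fun z => phi (x - z)) (at_right 0) (locally l).
Proof.
  intros Hl P HP. destruct (Hl P HP) as [e He]. exists e. intros y Hy Hy0. apply He.
  - apply ball_R. apply ball_R in Hy. replace (x - y - x) with (- (y - 0)) by ring.
    rewrite Rabs_Ropp; auto.
  - lra.
Qed.

Definition piecewise_lipschitz_everywhere (g : R -> R) (L B : R) : Prop :=
  forall c d, c <= d -> piecewise_lipschitz c d g L B.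

Lemma piecewise_lipschitz_everywhere_translate g L B x :
  piecewise_lipschitz_everywhere g L B ->
  piecewise_lipschitz_everywhere (fun z => g (x + z)) L B.
Proof.
  intros HP c d Hcd.
  apply (piecewise_lipschitz_ext _ _ (fun z => g (z + x))); [intros; f_equal; ring|].
  pose proof (piecewise_lipschitz_shift _ _ _ _ _ x (HP (c + x) (d + x) ltac:(lra))) as H.
  replace (c + x - x) with c in H by ring. replace (d + x - x) with d in H by ring. exact H.
Qed.

Lemma piecewise_lipschitz_everywhere_reflect g L B x :
  piecewise_lipschitz_everywhere g L B ->
  piecewise_lipschitz_everywhere (fun z => g (x - z)) L B.
Proof.
  intros HP c d Hcd.
  apply (piecewise_lipschitz_ext _ _ (fun z => g (x + - z))); [intros; f_equal; ring|].
  pose proof (piecewise_lipschitz_reflect _ _ _ _ _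
    (piecewise_lipschitz_everywhere_translate g L B x HP (- d) (- c) ltac:(lra))) as H.
  rewrite !Ropp_involutive in H. exact H.
Qed.

Lemma ex_RInt_mult_piecewise_lipschitz_everywhere (g h : R -> R) L B :
  piecewise_lipschitz_everywhere g L B -> (forall y, continuous h y) ->
  forall c d, ex_RInt (fun y => g y * h y) c d.
Proof.
  intros HP Hh c d. destruct (Rle_lt_dec c d).
  - apply (ex_RInt_piecewise_lipschitz_mult c d g L B h); auto.
  - apply ex_RInt_swap, (ex_RInt_piecewise_lipschitz_mult d c g L B h); [apply HP | | auto]; lra.
Qed.

Lemma RInt_mult_dirichlet_reflect (g : R -> R) K :
  ex_RInt (fun z => g z * dirichlet_kernel K z) (-1/2) 0 ->
  ex_RInt (fun z => g (- z) * dirichlet_kernel K z) 0 (1/2) ->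
  RInt (fun z => g z * dirichlet_kernel K z) (-1/2) 0
  = RInt (fun z => g (- z) * dirichlet_kernel K z) 0 (1/2).
Proof.
  intros Hex Hexm.
  pose proof (RInt_comp_lin (fun z => g z * dirichlet_kernel K z) (-1) 0 0 (1/2)) as E.
  replace (-1 * 0 + 0) with 0 in E by ring.
  replace (-1 * (1/2) + 0) with (-1/2) in E by field.
  assert (Hex' : ex_RInt (fun z => g z * dirichlet_kernel K z) 0 (-1/2))
    by (apply ex_RInt_swap, Hex).
  rewrite <- opp_RInt_swap, <- E by auto.
  rewrite <- (opp_opp (RInt (fun z => g (- z) * dirichlet_kernel K z) 0 (1/2))).
  rewrite <- (RInt_opp (fun z => g (- z) * dirichlet_kernel K z)) by auto.
  f_equal. apply RInt_ext_open; [lra|]. intros z _.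
  change (scal (-1) ?a) with (-1 * a). change (opp ?a) with (- a).
  replace (-1 * z + 0) with (- z) by ring. rewrite dirichlet_kernel_even. ring.
Qed.

(** By periodicity the period [[0, 1]] may be replaced by [[x - 1/2, x + 1/2]], which the
    evenness of the kernel folds onto [[0, 1/2]]. *)
Lemma RInt_dirichlet_convolution_fold (phi : R -> R) L B K x :
  (forall y, phi (y + 1) = phi y) -> piecewise_lipschitz_everywhere phi L B ->
  RInt (fun y => phi y * dirichlet_kernel K (x - y)) 0 1
  = RInt (fun z => phi (x + z) * dirichlet_kernel K z) 0 (1/2)
    + RInt (fun z => phi (x - z) * dirichlet_kernel K z) 0 (1/2).
Proof.
  intros Hper HPW.
  set (A := fun z => phi (x + z) * dirichlet_kernel K z).
  set (H := fun y => phi y * dirichlet_kernel K (x - y)).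
  assert (HexA : forall c d, ex_RInt A c d).
  { apply (ex_RInt_mult_piecewise_lipschitz_everywhere _ _ L B);
      [apply piecewise_lipschitz_everywhere_translate, HPW | apply continuous_dirichlet_kernel]. }
  assert (HexH : forall c d, ex_RInt H c d).
  { apply (ex_RInt_mult_piecewise_lipschitz_everywhere _ _ L B); auto. intros y.
    apply (continuous_ext (fun y => dirichlet_kernel K (-1 * y + x))); [intros; f_equal; ring|].
    apply continuous_dirichlet_kernel_affine. }
  assert (HperH : forall y, H (y + 1) = H y).
  { intros y. unfold H. rewrite Hper. f_equal.
    rewrite <- (dirichlet_kernel_periodic K (x - (y + 1))). f_equal; ring. }
  assert (E1 : RInt H 0 1 = RInt A (-1/2) (1/2)).
  { rewrite <- (RInt_periodic_translate H HperH HexH (x - 1/2)).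
    pose proof (RInt_comp_lin H 1 x (-1/2) (1/2)) as E.
    replace (1 * (-1/2) + x) with (x - 1/2) in E by field.
    replace (1 * (1/2) + x) with (x - 1/2 + 1) in E by field.
    rewrite <- E by auto. apply RInt_ext_open; [lra|]. intros z _.
    change (scal 1 ?a) with (1 * a). unfold H, A.
    replace (x - (1 * z + x)) with (- z) by ring. rewrite dirichlet_kernel_even.
    replace (1 * z + x) with (x + z) by ring. ring. }
  change (RInt H 0 1 = RInt A 0 (1/2) + RInt (fun z => phi (x - z) * dirichlet_kernel K z) 0 (1/2)).
  rewrite E1, <- (RInt_Chasles A (-1/2) 0 (1/2)) by auto. unfold A.
  rewrite (RInt_mult_dirichlet_reflect (fun z => phi (x + z))); [apply Rplus_comm | apply HexA|].
  apply (ex_RInt_mult_piecewise_lipschitz_everywhere _ _ L B);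
    [apply piecewise_lipschitz_everywhere_reflect, HPW | apply continuous_dirichlet_kernel].
Qed.

Lemma RInt_sub_const_mult_dirichlet (g : R -> R) K l :
  ex_RInt (fun z => g z * dirichlet_kernel K z) 0 (1/2) ->
  RInt (fun z => (g z - l) * dirichlet_kernel K z) 0 (1/2)
  = RInt (fun z => g z * dirichlet_kernel K z) 0 (1/2) - l * (1/2).
Proof.
  intros Hex.
  assert (HD : ex_RInt (dirichlet_kernel K) 0 (1/2))
    by (apply ex_RInt_of_continuous, continuous_dirichlet_kernel).
  transitivity (RInt (fun z => minus (g z * dirichlet_kernel K z)
                                     (scal l (dirichlet_kernel K z))) 0 (1/2)).
  { apply RInt_ext_open; [lra|]. intros z _.
    change (minus ?a ?b) with (a - b). change (scal ?a ?b) with (a * b). ring. }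
  etransitivity; [exact (RInt_minus _ _ 0 (1/2) Hex (ex_RInt_scal _ _ _ l HD))|].
  etransitivity; [apply f_equal; exact (RInt_scal _ _ _ l HD)|].
  rewrite (is_RInt_unique _ _ _ _ (is_RInt_dirichlet_kernel_half K)). reflexivity.
Qed.

Lemma dirichlet_convolution_limit (phi : R -> R) L B lp lm x :
  (forall y, phi (y + 1) = phi y) -> piecewise_lipschitz_everywhere phi L B ->
  filterlim phi (at_right x) (locally lp) -> filterlim phi (at_left x) (locally lm) ->
  phi x = (lp + lm) / 2 ->
  forall eps, 0 < eps -> exists K0, forall K, (K0 <= K)%nat ->
    Rabs (RInt (fun y => phi y * dirichlet_kernel K (x - y)) 0 1 - phi x) < eps.
Proof.
  intros Hper HPW Hr Hl Hx eps Heps.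
  assert (HPr := piecewise_lipschitz_everywhere_translate phi L B x HPW).
  assert (HPl := piecewise_lipschitz_everywhere_reflect phi L B x HPW).
  destruct (dirichlet_integral_right_limit (fun z => phi (x + z)) lp L B
              (HPr 0 (1/2) ltac:(lra)) (filterlim_at_right_shift phi x lp Hr) (eps / 2)
              ltac:(lra)) as [K1 HK1].
  destruct (dirichlet_integral_right_limit (fun z => phi (x - z)) lm L B
              (HPl 0 (1/2) ltac:(lra)) (filterlim_at_left_reflect phi x lm Hl) (eps / 2)
              ltac:(lra)) as [K2 HK2].
  exists (Nat.max K1 K2). intros K HK.
  specialize (HK1 K ltac:(lia)). specialize (HK2 K ltac:(lia)).
  rewrite RInt_sub_const_mult_dirichlet in HK1, HK2
    by (apply ex_RInt_mult_piecewise_lipschitz_everywhere with L B;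
        auto using continuous_dirichlet_kernel).
  rewrite (RInt_dirichlet_convolution_fold phi L B), Hx by auto.
  match goal with |- Rabs (?A + ?Am - _) < _ =>
    replace (A + Am - (lp + lm) / 2) with ((A - lp * (1/2)) + (Am - lm * (1/2))) by field end.
  eapply Rle_lt_trans; [apply Rabs_triang | lra].
Qed.

(** * Class [D] functions are piecewise Lipschitz *)

Definition Cpart (re : bool) (z : C) : R := if re then fst z else snd z.

Lemma filterlim_Cpart {T} (F : (T -> Prop) -> Prop) (g : T -> C) l re :
  filterlim g F (locally l) -> filterlim (fun y => Cpart re (g y)) F (locally (Cpart re l)).
Proof.
  intros Hg P [e He]. apply (Hg (fun w => P (Cpart re w))). exists e. intros w [H1 H2].
  apply He. destruct re; auto.
Qed.

Lemma continuous_Cpart (g : R -> C) x re :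
  @continuous R_UniformSpace C_R_NormedModule g x -> continuous (fun y => Cpart re (g y)) x.
Proof. apply filterlim_Cpart. Qed.

Lemma is_derive_Cpart (g : R -> C) x l re :
  @is_derive R_AbsRing C_R_NormedModule g x l -> is_derive (fun y => Cpart re (g y)) x (Cpart re l).
Proof.
  intros H. destruct re; simpl.
  - apply (filterdiff_ext_lin _ _ _ (filterdiff_comp g (fun t : C_R_NormedModule => fst t) _ _ H
       (filterdiff_linear _ is_linear_fst))). reflexivity.
  - apply (filterdiff_ext_lin _ _ _ (filterdiff_comp g (fun t : C_R_NormedModule => snd t) _ _ H
       (filterdiff_linear _ is_linear_snd))). reflexivity.
Qed.

Lemma Rabs_sub_le_of_derive_bound (G G' : R -> R) a0 a1 M :
  (forall x, a0 < x < a1 -> is_derive G x (G' x)) ->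
  (forall x, continuous G x) -> (forall x, a0 <= x <= a1 -> Rabs (G' x) <= M) ->
  forall u v, a0 <= u <= a1 -> a0 <= v <= a1 -> Rabs (G u - G v) <= M * Rabs (u - v).
Proof.
  intros Hd Hc HM u v Hu Hv.
  destruct (MVT_gen G v u G') as [c [Hcuv E]].
  - intros x Hx. apply Hd. unfold Rmin, Rmax in Hx; destruct Rle_dec; lra.
  - intros x _. apply continuity_pt_filterlim, Hc.
  - rewrite E, Rabs_mult. apply Rmult_le_compat_r; [apply Rabs_pos|].
    apply HM. unfold Rmin, Rmax in Hcuv; destruct Rle_dec; lra.
Qed.

Lemma is_derive_agree_open (phi G : R -> R) a0 a1 x l :
  (forall y, a0 < y < a1 -> phi y = G y) -> a0 < x < a1 -> is_derive phi x l -> is_derive G x l.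
Proof.
  intros Hagree Hx Hd. apply (is_derive_ext_loc phi); [|exact Hd].
  set (r := Rmin (x - a0) (a1 - x)).
  assert (Hr : 0 < r) by (unfold r; apply Rmin_glb_lt; lra).
  exists (mkposreal r Hr). intros t Ht0. pose proof (proj1 (ball_R _ _ _) Ht0) as Ht.
  simpl in Ht. assert (r <= x - a0) by apply Rmin_l. assert (r <= a1 - x) by apply Rmin_r.
  apply Rabs_def2 in Ht. apply Hagree. lra.
Qed.

(** On one piece of a class [D] function, the continuous extensions of a component and of its
    derivative to the closed piece are bounded; clamping then gives a global Lipschitz function. *)
Lemma C1_piece_lipschitz (g g' : R -> C) (a0 a1 : R) re : a0 < a1 ->
  (forall x, a0 < x < a1 ->
     @is_derive R_AbsRing C_R_NormedModule g x (g' x) /\ continuous g' x) ->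
  (exists l, right_lim g a0 l) -> (exists l, left_lim g a1 l) ->
  (exists l, right_lim g' a0 l) -> (exists l, left_lim g' a1 l) ->
  exists M (G : R -> R), (forall y, a0 < y < a1 -> G y = Cpart re (g y)) /\
    Rlipschitz M G /\ (forall y, Rabs (G y) <= M).
Proof.
  intros Ha Hd [l1 Hl1] [l2 Hl2] [l3 Hl3] [l4 Hl4].
  set (phi := fun y => Cpart re (g y)).
  destruct (C0_extension_lt phi (Cpart re l1) (Cpart re l2) a0 a1 Ha) as [G [HGc [HGe _]]];
    [intros c Hc; apply continuous_Cpart, ex_derive_continuous; exists (g' c); apply Hd; auto
    | apply filterlim_Cpart; auto | apply filterlim_Cpart; auto |].
  destruct (C0_extension_lt (fun y => Cpart re (g' y)) (Cpart re l3) (Cpart re l4) a0 a1 Ha)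
    as [G' [HG'c [HG'e _]]];
    [intros c Hc; apply continuous_Cpart, Hd; auto
    | apply filterlim_Cpart; auto | apply filterlim_Cpart; auto |].
  destruct (continuity_ab_maj (fun y => Rabs (G' y)) a0 a1 ltac:(lra)) as [xm [HM _]].
  { intros c _. apply continuity_pt_filterlim, (continuous_comp G' Rabs), continuous_Rabs.
    apply HG'c. }
  destruct (continuity_ab_maj (fun y => Rabs (G y)) a0 a1 ltac:(lra)) as [xb [HB _]].
  { intros c _. apply continuity_pt_filterlim, (continuous_comp G Rabs), continuous_Rabs.
    apply HGc. }
  set (M := Rmax (Rabs (G' xm)) (Rabs (G xb))).
  assert (Hderiv : forall x, a0 < x < a1 -> is_derive G x (G' x)).
  { intros x Hx. apply (is_derive_agree_open phi G a0 a1); [intros; symmetry; auto | auto|].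
    rewrite HG'e by auto. apply is_derive_Cpart, Hd; auto. }
  exists M, (fun y => G (clamp a0 a1 y)). split; [|split].
  - intros y Hy. rewrite clamp_id by lra. apply HGe; auto.
  - intros y z.
    assert (HM' : forall x, a0 <= x <= a1 -> Rabs (G' x) <= M)
      by (intros x Hx; eapply Rle_trans; [apply HM; auto | apply Rmax_l]).
    eapply Rle_trans;
      [apply (Rabs_sub_le_of_derive_bound G G' a0 a1 M); auto; apply clamp_in; lra|].
    apply Rmult_le_compat_l; [eapply Rle_trans; [apply Rabs_pos | apply (HM' a0); lra]|].
    rewrite <- (Rmult_1_l (Rabs (y - z))). apply clamp_lipschitz.
  - intros y. eapply Rle_trans; [apply HB, clamp_in; lra | apply Rmax_r].
Qed.

Lemma finite_bound (P : nat -> R -> Prop) n :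
  (forall i, (i < n)%nat -> exists M, P i M) -> (forall i M M', P i M -> M <= M' -> P i M') ->
  exists M, forall i, (i < n)%nat -> P i M.
Proof.
  intros H Hm. induction n; [exists 0; intros; lia|].
  destruct IHn as [M1 HM1]; [intros; apply H; lia|].
  destruct (H n ltac:(lia)) as [M2 HM2].
  exists (Rmax M1 M2). intros i Hi. destruct (Nat.eq_dec i n).
  - subst. apply (Hm _ M2); auto. apply Rmax_r.
  - apply (Hm _ M1); [apply HM1; lia | apply Rmax_l].
Qed.

Lemma class_D_piecewise_lipschitz_unit f re : class_D f ->
  exists M, piecewise_lipschitz 0 1 (fun y => Cpart re (f y)) M M.
Proof.
  intros [_ [_ [[n [a [Ha0 [Han [Hmon Hp]]]]] _]]].
  set (P := fun i M => exists G : R -> R,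
    (forall y, a i < y < a (S i) -> G y = Cpart re (f y)) /\
    Rlipschitz M G /\ (forall y, Rabs (G y) <= M)).
  destruct (finite_bound P n) as [M HM].
  - intros i Hi. destruct (Hp i Hi) as [f' [Hd [H1 [H2 [H3 H4]]]]].
    destruct (C1_piece_lipschitz f f' (a i) (a (S i)) re (Hmon i Hi) Hd H1 H2 H3 H4)
      as [M [G HG]].
    exists M, G. exact HG.
  - intros i M M' [G [HG1 [HG2 HG3]]] HMM. exists G. split; [auto|split].
    + intros y z. eapply Rle_trans; [apply HG2|].
      apply Rmult_le_compat_r; [apply Rabs_pos | auto].
    + intros y; eapply Rle_trans; [apply HG3 | auto].
  - exists M, n, a. split; [auto | split; [auto | split]].
    + intros j Hj; left; auto.
    + intros j Hj. apply HM; auto.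
Qed.

Lemma class_D_piecewise_lipschitz f re : class_D f ->
  exists M, piecewise_lipschitz_everywhere (fun y => Cpart re (f y)) M M.
Proof.
  intros HD. destruct (class_D_piecewise_lipschitz_unit f re HD) as [M HM]. exists M.
  set (phi := fun y => Cpart re (f y)).
  assert (Hper : forall y, phi (y + 1) = phi y).
  { intros y. unfold phi. destruct HD as [_ [Hp _]]. rewrite Hp. auto. }
  assert (Hn : forall n : Z, piecewise_lipschitz (IZR n) (IZR n + 1) phi M M).
  { intros n. pose proof (piecewise_lipschitz_shift _ _ _ _ _ (- IZR n) HM) as H.
    replace (0 - - IZR n) with (IZR n) in H by ring.
    replace (1 - - IZR n) with (IZR n + 1) in H by ring.
    apply (piecewise_lipschitz_ext _ _ _ phi) in H; auto.
    intros y. rewrite <- opp_IZR. apply (periodic_IZR phi Hper). }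
  assert (Hk : forall k : nat, piecewise_lipschitz (- INR k) (INR k) phi M M).
  { induction k; [simpl; rewrite Ropp_0; apply piecewise_lipschitz_point|].
    rewrite S_INR. apply (piecewise_lipschitz_concat _ (- INR k)).
    - pose proof (Hn (- Z.of_nat (S k))%Z) as H. rewrite opp_IZR, <- INR_IZR_INZ, S_INR in H.
      replace (- (INR k + 1) + 1) with (- INR k) in H by ring. exact H.
    - apply (piecewise_lipschitz_concat _ (INR k)); auto.
      pose proof (Hn (Z.of_nat k)) as H. rewrite <- INR_IZR_INZ in H. exact H. }
  intros c d Hcd.
  set (k := Z.to_nat (up (Rabs c + Rabs d))).
  assert (Hkk : Rabs c + Rabs d <= INR k).
  { unfold k. destruct (archimed (Rabs c + Rabs d)) as [Ha _].
    pose proof (Rabs_pos c). pose proof (Rabs_pos d).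
    assert (0 <= up (Rabs c + Rabs d))%Z by (apply le_IZR; lra).
    rewrite INR_IZR_INZ, Z2Nat.id by auto. lra. }
  apply (piecewise_lipschitz_restrict (- INR k) (INR k)); auto.
  - pose proof (Rabs_pos d). pose proof (Rle_abs (- c)). rewrite Rabs_Ropp in *. lra.
  - pose proof (Rabs_pos c). pose proof (Rle_abs d). lra.
Qed.

Lemma RInt_C_components (g : R -> C) a b :
  ex_RInt (fun y => fst (g y)) a b -> ex_RInt (fun y => snd (g y)) a b ->
  @RInt C_R_CompleteNormedModule g a b
  = (RInt (fun y => fst (g y)) a b, RInt (fun y => snd (g y)) a b).
Proof.
  intros H1 H2. apply is_RInt_unique.
  apply (@is_RInt_fct_extend_pair R_NormedModule R_NormedModule g a b);
    apply (@RInt_correct R_CompleteNormedModule); auto.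
Qed.

Lemma RInt_C_ext (F G : R -> C) a b : (forall y, F y = G y) ->
  @RInt C_R_CompleteNormedModule F a b = @RInt C_R_CompleteNormedModule G a b.
Proof. intros H. apply RInt_ext. intros y _. apply H. Qed.

Lemma ex_RInt_C_components (g : R -> C) a b :
  ex_RInt (fun y => fst (g y)) a b -> ex_RInt (fun y => snd (g y)) a b ->
  @ex_RInt C_R_NormedModule g a b.
Proof. apply (@ex_RInt_fct_extend_pair R_NormedModule R_NormedModule). Qed.

Lemma ex_RInt_lin_comb (f g : R -> R) a b c1 c2 : ex_RInt f a b -> ex_RInt g a b ->
  ex_RInt (fun y => c1 * f y + c2 * g y) a b.
Proof.
  intros Hf Hg. apply (@ex_RInt_plus R_NormedModule (fun y => c1 * f y) (fun y => c2 * g y));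
    apply (@ex_RInt_scal R_NormedModule); auto.
Qed.

Lemma RInt_lin_comb (f g : R -> R) a b c1 c2 : ex_RInt f a b -> ex_RInt g a b ->
  RInt (fun y => c1 * f y + c2 * g y) a b = c1 * RInt f a b + c2 * RInt g a b.
Proof.
  intros Hf Hg. apply is_RInt_unique.
  apply (@is_RInt_plus R_NormedModule (fun y => c1 * f y) (fun y => c2 * g y));
    apply (@is_RInt_scal R_NormedModule), (@RInt_correct R_CompleteNormedModule); auto.
Qed.

Lemma RInt_C_mult_const (g : R -> C) a b c : @ex_RInt C_R_NormedModule g a b ->
  @RInt C_R_CompleteNormedModule (fun y => Cmult (g y) c) a b
  = Cmult (@RInt C_R_CompleteNormedModule g a b) c.
Proof.
  intros H.
  pose proof (@ex_RInt_fct_extend_fst R_NormedModule R_NormedModule g a b H) as H1.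
  pose proof (@ex_RInt_fct_extend_snd R_NormedModule R_NormedModule g a b H) as H2.
  destruct c as [c1 c2].
  rewrite RInt_C_components; auto.
  - rewrite RInt_C_components by auto. apply injective_projections; simpl.
    + transitivity (c1 * RInt (fun y => fst (g y)) a b + - c2 * RInt (fun y => snd (g y)) a b);
        [|ring].
      rewrite <- RInt_lin_comb by auto. apply RInt_ext; intros; simpl; ring.
    + transitivity (c2 * RInt (fun y => fst (g y)) a b + c1 * RInt (fun y => snd (g y)) a b);
        [|ring].
      rewrite <- RInt_lin_comb by auto. apply RInt_ext; intros; simpl; ring.
  - apply (ex_RInt_ext (fun y => c1 * fst (g y) + - c2 * snd (g y))); [intros; simpl; ring|].
    apply ex_RInt_lin_comb; auto.
  - apply (ex_RInt_ext (fun y => c2 * fst (g y) + c1 * snd (g y))); [intros; simpl; ring|].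
    apply ex_RInt_lin_comb; auto.
Qed.

Lemma Csum_map_plus {A} (l : list A) (g h : A -> C) :
  Csum (map (fun k => Cplus (g k) (h k)) l) = Cplus (Csum (map g l)) (Csum (map h l)).
Proof. induction l; simpl; [ring | rewrite IHl; ring]. Qed.

Lemma Csum_map_mult_l {A} (l : list A) (g : A -> C) c :
  Csum (map (fun k => Cmult c (g k)) l) = Cmult c (Csum (map g l)).
Proof. induction l; simpl; [ring | rewrite IHl; ring]. Qed.

Lemma Csum_map_mult_r {A} (l : list A) (g : A -> C) c :
  Csum (map (fun k => Cmult (g k) c) l) = Cmult (Csum (map g l)) c.
Proof. induction l; simpl; [ring | rewrite IHl; ring]. Qed.

Lemma Csum_map_app {A} (l1 l2 : list A) (g : A -> C) :
  Csum (map g (l1 ++ l2)) = Cplus (Csum (map g l1)) (Csum (map g l2)).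
Proof. induction l1; simpl; [ring | rewrite IHl1; ring]. Qed.

Lemma Csum_map_ext_in {A} (l : list A) (g h : A -> C) :
  (forall k, In k l -> g k = h k) -> Csum (map g l) = Csum (map h l).
Proof. intros H. rewrite (map_ext_in g h); auto. Qed.

Lemma Csum_map_ext {A} (l : list A) (g h : A -> C) :
  (forall k, g k = h k) -> Csum (map g l) = Csum (map h l).
Proof. intros H. apply Csum_map_ext_in; auto. Qed.

Lemma Csum_map_swap {A B} (l1 : list A) (l2 : list B) (F : A -> B -> C) :
  Csum (map (fun a => Csum (map (fun b => F a b) l2)) l1)
  = Csum (map (fun b => Csum (map (fun a => F a b) l1)) l2).
Proof.
  induction l1; simpl.
  - induction l2; simpl; [reflexivity | rewrite <- IHl2; ring].
  - rewrite IHl1, Csum_map_plus. reflexivity.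
Qed.

Lemma RInt_Csum {A} (l : list A) (G : A -> R -> C) a b :
  (forall k, @ex_RInt C_R_NormedModule (G k) a b) ->
  @ex_RInt C_R_NormedModule (fun y => Csum (map (fun k => G k y) l)) a b /\
  Csum (map (fun k => @RInt C_R_CompleteNormedModule (G k) a b : C) l)
  = @RInt C_R_CompleteNormedModule (fun y => Csum (map (fun k => G k y) l)) a b.
Proof.
  intros Hex. induction l as [|k l [IH1 IH2]]; cbn [map].
  - assert (Hex0 : ex_RInt (fun _ : R => 0) a b) by apply ex_RInt_const.
    split; [apply ex_RInt_C_components; simpl; auto|].
    rewrite RInt_C_components by (simpl; auto). simpl.
    rewrite RInt_const. change (scal (b - a) 0) with ((b - a) * 0).
    apply injective_projections; simpl; ring.
  - split; [exact (@ex_RInt_plus C_R_NormedModule (G k) _ a b (Hex k) IH1)|].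
    change (Csum (?x :: ?l)) with (Cplus x (Csum l)). rewrite IH2. symmetry.
    exact (@RInt_plus C_R_CompleteNormedModule (G k) _ a b (Hex k) IH1).
Qed.

(** * Pointwise convergence of Fourier series of class [D] functions *)

Lemma e_plus a b : e (a + b) = Cmult (e a) (e b).
Proof.
  unfold e. apply injective_projections; simpl.
  - rewrite <- cos_plus. f_equal; ring.
  - replace (2 * PI * (a + b)) with (2 * PI * a + 2 * PI * b) by ring. rewrite sin_plus. ring.
Qed.

Lemma continuous_e_affine a b y :
  continuous (fun z => fst (e (a * z + b))) y /\ continuous (fun z => snd (e (a * z + b))) y.
Proof.
  unfold e; simpl. split.
  - apply (continuous_ext (fun z => cos ((2 * PI * a) * z + 2 * PI * b)));
      [intros; f_equal; ring | apply continuous_cos_affine].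
  - apply (continuous_ext (fun z => sin ((2 * PI * a) * z + 2 * PI * b)));
      [intros; f_equal; ring | apply continuous_sin_affine].
Qed.

Lemma symrange_S K :
  symrange (S K) = (- Z.of_nat (S K))%Z :: symrange K ++ (Z.of_nat (S K) :: nil).
Proof.
  unfold symrange. replace (2 * S K + 1)%nat with (S (S (2 * K + 1))) by lia.
  rewrite seq_S. cbn [seq map app]. f_equal; try lia.
  rewrite map_app. f_equal.
  - rewrite <- seq_shift, map_map. apply map_ext. intros; lia.
  - cbn [map]. f_equal. lia.
Qed.

Lemma Csum_e_symrange K z :
  Csum (map (fun k => e (IZR k * z)) (symrange K)) = RtoC (dirichlet_kernel K z).
Proof.
  induction K.
  - unfold symrange, e. simpl. rewrite Rmult_0_l, Rmult_0_r, cos_0, sin_0.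
    apply injective_projections; simpl; ring.
  - rewrite symrange_S. cbn [map]. change (Csum (?x :: ?l)) with (Cplus x (Csum l)).
    rewrite Csum_map_app, IHK. cbn [map dirichlet_kernel].
    change (Csum (?x :: nil)) with (Cplus x (RtoC 0)).
    unfold e. rewrite opp_IZR, <- INR_IZR_INZ.
    set (t := INR (S K)).
    replace (2 * PI * (- t * z)) with (- (2 * PI * t * z)) by ring.
    replace (2 * PI * (t * z)) with (2 * PI * t * z) by ring.
    rewrite cos_neg, sin_neg. apply injective_projections; simpl; ring.
Qed.

Lemma ex_RInt_class_D_mult (f h : R -> C) : class_D f ->
  (forall y, continuous (fun z => fst (h z)) y) -> (forall y, continuous (fun z => snd (h z)) y) ->
  forall a b, @ex_RInt C_R_NormedModule (fun y => Cmult (f y) (h y)) a b.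
Proof.
  intros HD H1 H2 a b.
  destruct (class_D_piecewise_lipschitz f true HD) as [M1 HM1].
  destruct (class_D_piecewise_lipschitz f false HD) as [M2 HM2].
  assert (Hex : forall re h', (forall y, continuous h' y) ->
             ex_RInt (fun y => Cpart re (f y) * h' y) a b).
  { intros [|] h' Hh'; eapply ex_RInt_mult_piecewise_lipschitz_everywhere; eauto. }
  apply ex_RInt_C_components.
  - apply (ex_RInt_ext (fun y => 1 * (Cpart true (f y) * fst (h y))
                                 + -1 * (Cpart false (f y) * snd (h y))));
      [intros; simpl; ring | apply ex_RInt_lin_comb; auto].
  - apply (ex_RInt_ext (fun y => 1 * (Cpart true (f y) * snd (h y))
                                 + 1 * (Cpart false (f y) * fst (h y))));
      [intros; simpl; ring | apply ex_RInt_lin_comb; auto].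
Qed.

Lemma ex_RInt_class_D_mult_e f a b : class_D f ->
  forall c d, @ex_RInt C_R_NormedModule (fun y => Cmult (f y) (e (a * y + b))) c d.
Proof.
  intros HD. apply ex_RInt_class_D_mult; auto; apply continuous_e_affine.
Qed.

Definition fourier_partial_sum (f : R -> C) (x : R) (K : nat) : C :=
  Csum (map (fun k => Cmult (fourier_coeff f k) (e (IZR k * x))) (symrange K)).

Lemma fourier_partial_sum_RInt f x K : class_D f ->
  fourier_partial_sum f x K
  = @RInt C_R_CompleteNormedModule (fun y => Cmult (f y) (RtoC (dirichlet_kernel K (x - y)))) 0 1.
Proof.
  intros HD. unfold fourier_partial_sum, fourier_coeff.
  set (G := fun (k : Z) (y : R) => Cmult (f y) (e (IZR k * (x - y)))).
  assert (HexG : forall k, @ex_RInt C_R_NormedModule (G k) 0 1).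
  { intros k. replace (G k) with (fun y => Cmult (f y) (e (- IZR k * y + IZR k * x)))
      by (apply functional_extensionality; intros; unfold G; do 2 f_equal; ring).
    apply ex_RInt_class_D_mult_e, HD. }
  rewrite (Csum_map_ext _ _ (fun k => @RInt C_R_CompleteNormedModule (G k) 0 1)).
  2: { intros k. rewrite <- RInt_C_mult_const.
       - apply RInt_C_ext. intros y. unfold G.
         replace (IZR k * (x - y)) with (- (IZR k * y) + IZR k * x) by ring.
         rewrite e_plus. ring.
       - replace (fun y => Cmult (f y) (e (- (IZR k * y))))
           with (fun y => Cmult (f y) (e (- IZR k * y + 0)))
           by (apply functional_extensionality; intros; do 2 f_equal; ring).
         apply ex_RInt_class_D_mult_e, HD. }
  rewrite (proj2 (RInt_Csum (symrange K) G 0 1 HexG)).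
  apply RInt_C_ext. intros y. unfold G.
  rewrite Csum_map_mult_l, Csum_e_symrange. reflexivity.
Qed.

Lemma Cpart_fourier_partial_sum f x K re : class_D f ->
  Cpart re (fourier_partial_sum f x K)
  = RInt (fun y => Cpart re (f y) * dirichlet_kernel K (x - y)) 0 1.
Proof.
  intros HD. rewrite fourier_partial_sum_RInt by auto.
  assert (Hex : forall re', ex_RInt (fun y => Cpart re' (f y) * dirichlet_kernel K (x - y)) 0 1).
  { intros re'. destruct (class_D_piecewise_lipschitz f re' HD) as [M HM].
    apply (ex_RInt_mult_piecewise_lipschitz_everywhere _ _ M M HM). intros y.
    apply (continuous_ext (fun z => dirichlet_kernel K (-1 * z + x))); [intros; f_equal; ring|].
    apply continuous_dirichlet_kernel_affine. }
  rewrite RInt_C_components.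
  - destruct re; apply RInt_ext_open; try lra; intros; simpl; ring.
  - apply (ex_RInt_ext (fun y => Cpart true (f y) * dirichlet_kernel K (x - y)));
      [intros; simpl; ring | apply Hex].
  - apply (ex_RInt_ext (fun y => Cpart false (f y) * dirichlet_kernel K (x - y)));
      [intros; simpl; ring | apply Hex].
Qed.

(** Dirichlet's theorem; the limit is [f x] because class [D] functions take the mean of their
    one-sided limits. *)
Lemma fourier_partial_sum_limit f x : class_D f ->
  filterlim (fourier_partial_sum f x) eventually (locally (f x)).
Proof.
  intros HD P [eps HP].
  assert (Hpart : forall re, exists K0, forall K, (K0 <= K)%nat ->
             Rabs (Cpart re (fourier_partial_sum f x K) - Cpart re (f x)) < eps).
  { intros re. destruct (class_D_piecewise_lipschitz f re HD) as [M HM].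
    destruct HD as [Hint [Hper [HC1 Hlim]]].
    destruct (Hlim x) as [lp [lm [Hr [Hl Hx]]]].
    destruct (dirichlet_convolution_limit (fun y => Cpart re (f y)) M M
                (Cpart re lp) (Cpart re lm) x) with eps as [K0 HK0];
      [intros y; rewrite Hper; auto | auto | apply filterlim_Cpart; auto
      | apply filterlim_Cpart; auto | rewrite Hx; destruct re; simpl; field | apply cond_pos |].
    exists K0. intros K HK. rewrite Cpart_fourier_partial_sum by (repeat split; auto).
    apply HK0, HK. }
  destruct (Hpart true) as [K1 HK1]. destruct (Hpart false) as [K2 HK2].
  exists (Nat.max K1 K2). intros n Hn. apply HP.
  split; apply ball_R; [apply (HK1 n) | apply (HK2 n)]; lia.
Qed.

(** * Gauss sums at rational times *)

Lemma e_IZR n : e (IZR n) = RtoC 1.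
Proof.
  unfold e. rewrite <- (Rplus_0_l (IZR n)). apply injective_projections; simpl.
  - rewrite (periodic_IZR (fun y => cos (2 * PI * y))), Rmult_0_r, cos_0; [reflexivity|].
    intros y. replace (2 * PI * (y + 1)) with (2 * PI * y + 2 * INR 1 * PI) by (simpl; ring).
    apply cos_period.
  - rewrite (periodic_IZR (fun y => sin (2 * PI * y))), Rmult_0_r, sin_0; [reflexivity|].
    intros y. replace (2 * PI * (y + 1)) with (2 * PI * y + 2 * INR 1 * PI) by (simpl; ring).
    apply sin_period.
Qed.

Lemma e_plus_IZR t n : e (t + IZR n) = e t.
Proof. rewrite e_plus, e_IZR. ring. Qed.

Lemma e_fraction_neq_1 (r q : Z) : (0 < r < q)%Z -> e (IZR r / IZR q) <> RtoC 1.
Proof.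
  intros Hr Heq. assert (H1 := f_equal fst Heq). unfold e in H1; simpl in H1.
  assert (Hq : 0 < IZR q) by (apply IZR_lt; lia).
  assert (Ht : 0 < IZR r / IZR q < 1).
  { split; [apply Rdiv_lt_0_compat; [apply IZR_lt; lia | auto]|].
    apply Rmult_lt_reg_r with (IZR q); auto. unfold Rdiv; rewrite Rmult_assoc, Rinv_l by lra.
    rewrite Rmult_1_r, Rmult_1_l. apply IZR_lt; lia. }
  set (t := IZR r / IZR q) in *.
  replace (2 * PI * t) with (2 * (PI * t)) in H1 by ring. rewrite cos_2a_sin in H1.
  assert (0 < sin (PI * t)) by (apply sin_gt_0; pose proof PI_RGT_0; nra).
  nra.
Qed.

Lemma Csum_telescope (a : nat -> C) n :
  Csum (map (fun j => Cplus (a (S j)) (Copp (a j))) (seq 0 n)) = Cplus (a n) (Copp (a 0%nat)).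
Proof.
  induction n; [simpl; ring|].
  rewrite seq_S, Csum_map_app, IHn. simpl. ring.
Qed.

Lemma Csum_e_residues_divisible (q m : Z) : (0 < q)%Z -> (m mod q = 0)%Z ->
  Csum (map (fun v => e (IZR v * IZR m / IZR q)) (residues q)) = RtoC (IZR q).
Proof.
  intros Hq Hm. assert (Hq' : IZR q <> 0) by (apply not_0_IZR; lia).
  apply Z.mod_divide in Hm; [|lia]. destruct Hm as [c Hc].
  unfold residues. rewrite map_map, (Csum_map_ext _ _ (fun _ => RtoC 1)).
  - assert (Hn : forall n, Csum (map (fun _ : nat => RtoC 1) (seq 0 n)) = RtoC (INR n)).
    { induction n; [reflexivity|].
      rewrite seq_S, Csum_map_app, IHn, S_INR. apply injective_projections; simpl; ring. }
    rewrite Hn, INR_IZR_INZ, Z2Nat.id by lia. reflexivity.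
  - intros j. rewrite Hc, mult_IZR.
    replace (IZR (Z.of_nat j) * (IZR c * IZR q) / IZR q) with (0 + IZR (Z.of_nat j * c))
      by (rewrite mult_IZR; field; auto).
    rewrite e_plus_IZR. apply (e_IZR 0).
Qed.

(** Multiplying the sum by [e(m/q) - 1] telescopes it to [e(m) - 1 = 0]. *)
Lemma Csum_e_residues_not_divisible (q m : Z) : (0 < q)%Z -> (m mod q <> 0)%Z ->
  Csum (map (fun v => e (IZR v * IZR m / IZR q)) (residues q)) = RtoC 0.
Proof.
  intros Hq Hm. assert (Hq' : IZR q <> 0) by (apply not_0_IZR; lia).
  set (w := e (IZR m / IZR q)).
  assert (Hw1 : w <> RtoC 1).
  { unfold w. rewrite (Z.div_mod m q), plus_IZR, mult_IZR by lia.
    replace ((IZR q * IZR (m / q) + IZR (m mod q)) / IZR q)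
      with (IZR (m mod q) / IZR q + IZR (m / q)) by (field; auto).
    rewrite e_plus_IZR. apply e_fraction_neq_1. pose proof (Z.mod_pos_bound m q Hq). lia. }
  assert (Hw : Cplus w (Copp (RtoC 1)) <> RtoC 0).
  { intros H. apply Hw1. pose proof (f_equal fst H). pose proof (f_equal snd H).
    simpl in *. apply injective_projections; simpl; lra. }
  unfold residues. rewrite map_map.
  set (a := fun j : nat => e (IZR (Z.of_nat j) * IZR m / IZR q)).
  set (total := Csum (map a (seq 0 (Z.to_nat q)))).
  assert (HS : Cmult total (Cplus w (Copp (RtoC 1))) = RtoC 0).
  { unfold total. rewrite <- Csum_map_mult_r.
    rewrite (Csum_map_ext _ _ (fun j => Cplus (a (S j)) (Copp (a j)))).
    - rewrite Csum_telescope. unfold a. rewrite Z2Nat.id by lia.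
      replace (IZR q * IZR m / IZR q) with (0 + IZR m) by (field; auto).
      rewrite e_plus_IZR. simpl. rewrite Rmult_0_l. unfold Rdiv; rewrite Rmult_0_l.
      rewrite (e_IZR 0). ring.
    - intros j. unfold a, w. rewrite Nat2Z.inj_succ, succ_IZR.
      replace ((IZR (Z.of_nat j) + 1) * IZR m / IZR q)
        with (IZR (Z.of_nat j) * IZR m / IZR q + IZR m / IZR q) by (field; auto).
      rewrite e_plus. ring. }
  transitivity (Cmult (Cmult total (Cplus w (Copp (RtoC 1)))) (Cinv (Cplus w (Copp (RtoC 1))))).
  - rewrite <- Cmult_assoc, Cinv_r by auto. ring.
  - rewrite HS. ring.
Qed.

Lemma Peval_sub_divide P k k' : (k - k' | Peval P k - Peval P k')%Z.
Proof.
  induction P; simpl; [exists 0%Z; ring|].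
  replace (a + k * Peval P k - (a + k' * Peval P k'))%Z with
    (k * (Peval P k - Peval P k') + (k - k') * Peval P k')%Z by ring.
  apply Z.divide_add_r; [apply Z.divide_mul_r; auto | apply Z.divide_mul_l, Z.divide_refl].
Qed.

Lemma Csum_indicator_nat (F : Z -> C) (w0 : Z) n : (0 <= w0)%Z ->
  Csum (map (fun w => if Z.eqb w w0 then F w else RtoC 0) (map Z.of_nat (seq 0 n)))
  = if Z.ltb w0 (Z.of_nat n) then F w0 else RtoC 0.
Proof.
  intros Hw. induction n; [simpl; destruct (Z.ltb_spec w0 0); [lia | auto]|].
  rewrite seq_S, map_app, Csum_map_app, IHn. cbn [map]. rewrite Nat.add_0_l.
  change (Csum (?x :: nil)) with (Cplus x (RtoC 0)).
  destruct (Z.ltb_spec w0 (Z.of_nat n)); destruct (Z.ltb_spec w0 (Z.of_nat (S n)));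
    destruct (Z.eqb_spec (Z.of_nat n) w0); try lia; subst; ring.
Qed.

Lemma Csum_indicator_residues (q : Z) (F : Z -> C) (k : Z) : (0 < q)%Z ->
  Csum (map (fun w => if Z.eqb ((k - w) mod q)%Z 0 then F w else RtoC 0) (residues q))
  = F (k mod q)%Z.
Proof.
  intros Hq. unfold residues.
  rewrite (Csum_map_ext_in _ _ (fun w => if Z.eqb w (k mod q)%Z then F w else RtoC 0)).
  - rewrite Csum_indicator_nat by (apply Z.mod_pos_bound; auto).
    rewrite Z2Nat.id by lia. pose proof (Z.mod_pos_bound k q Hq).
    destruct (Z.ltb_spec (k mod q) q); [auto | lia].
  - intros w Hw. apply in_map_iff in Hw. destruct Hw as [j [Hj1 Hj2]]. apply in_seq in Hj2.
    assert (Hw : (0 <= w < q)%Z) by lia.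
    destruct (Z.eqb_spec ((k - w) mod q) 0) as [H|H];
      destruct (Z.eqb_spec w (k mod q)) as [H'|H']; auto; exfalso.
    + apply H'. apply Z.mod_divide in H; [|lia]. destruct H as [c Hc].
      replace k with (w + c * q)%Z by lia. rewrite Z_mod_plus_full, Z.mod_small; auto.
    + apply H, Z.mod_divide; [lia|]. exists (k / q)%Z.
      pose proof (Z.div_mod k q ltac:(lia)). lia.
Qed.

(** Since [P(k) = P(k mod q) (mod q)], [e(u P(k)/q)] depends only on [k mod q]; expanding it in the
    characters [e(k v/q)] of [Z/qZ] gives the coefficients [G(u,v;q)/q]. *)
Lemma e_rational_Peval_expansion (P : list Z) (u q k : Z) : (0 < q)%Z ->
  Cmult (RtoC (1 / IZR q))
    (Csum (map (fun v => Cmult (Gsum P u v q) (e (IZR k * (IZR v / IZR q)))) (residues q)))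
  = e (IZR u / IZR q * IZR (Peval P k)).
Proof.
  intros Hq. assert (Hq' : IZR q <> 0) by (apply not_0_IZR; lia).
  unfold Gsum, e_q.
  rewrite (Csum_map_ext (residues q) _ (fun v => Csum (map (fun w =>
             Cmult (e (IZR (u * Peval P w) / IZR q)) (e (IZR v * IZR (k - w) / IZR q)))
             (residues q)))).
  2: { intros v. rewrite <- Csum_map_mult_r. apply Csum_map_ext. intros w.
       rewrite <- !e_plus. f_equal. rewrite !minus_IZR, !mult_IZR. field. auto. }
  rewrite Csum_map_swap.
  rewrite (Csum_map_ext (residues q) _ (fun w => Cmult (e (IZR (u * Peval P w) / IZR q))
             (if Z.eqb ((k - w) mod q) 0 then RtoC (IZR q) else RtoC 0))).
  2: { intros w. rewrite Csum_map_mult_l. destruct (Z.eqb_spec ((k - w) mod q) 0).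
       - rewrite Csum_e_residues_divisible; auto.
       - rewrite Csum_e_residues_not_divisible; auto. }
  rewrite <- Csum_map_mult_l.
  rewrite (Csum_map_ext _ _ (fun w => if Z.eqb ((k - w) mod q) 0
                                      then e (IZR (u * Peval P w) / IZR q) else RtoC 0)).
  2: { intros w. destruct (Z.eqb ((k - w) mod q) 0);
       apply injective_projections; simpl; field; auto. }
  rewrite Csum_indicator_residues by auto.
  destruct (Peval_sub_divide P k (k mod q)) as [d Hd].
  assert (Hk : (k - k mod q = q * (k / q))%Z) by (pose proof (Z.div_mod k q ltac:(lia)); lia).
  assert (E : (Peval P k = Peval P (k mod q) + q * (k / q) * d)%Z) by (rewrite Hk in Hd; lia).
  rewrite <- (e_plus_IZR _ (u * (k / q) * d)). f_equal.
  rewrite E, !mult_IZR, plus_IZR, !mult_IZR. field. auto.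
Qed.

Lemma U_partial_rational_time (P : list Z) f (u q : Z) x K : (0 < q)%Z ->
  U_partial P f (IZR u / IZR q) x K
  = Cmult (RtoC (1 / IZR q)) (Csum (map (fun v =>
      Cmult (Gsum P u v q) (fourier_partial_sum f (x + IZR v / IZR q) K)) (residues q))).
Proof.
  intros Hq. unfold fourier_partial_sum.
  rewrite (Csum_map_ext (residues q) _ (fun v => Csum (map (fun k => Cmult (Gsum P u v q)
      (Cmult (fourier_coeff f k) (e (IZR k * (x + IZR v / IZR q))))) (symrange K))))
    by (intros v; rewrite Csum_map_mult_l; auto).
  rewrite Csum_map_swap, <- Csum_map_mult_l.
  unfold U_partial. apply Csum_map_ext. intros k.
  rewrite (Csum_map_ext (residues q) _ (fun v => Cmult (Cmult (fourier_coeff f k) (e (IZR k * x)))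
      (Cmult (Gsum P u v q) (e (IZR k * (IZR v / IZR q)))))).
  2: { intros v. rewrite Rmult_plus_distr_l, e_plus. ring. }
  rewrite Csum_map_mult_l.
  transitivity (Cmult (Cmult (fourier_coeff f k) (e (IZR k * x)))
     (Cmult (RtoC (1 / IZR q)) (Csum (map (fun v =>
        Cmult (Gsum P u v q) (e (IZR k * (IZR v / IZR q)))) (residues q))))); [|ring].
  rewrite e_rational_Peval_expansion, Rplus_comm, e_plus by auto. ring.
Qed.

Lemma filterlim_Cplus {T} (F : (T -> Prop) -> Prop) {FF : Filter F} (g h : T -> C) lg lh :
  filterlim g F (locally lg) -> filterlim h F (locally lh) ->
  filterlim (fun n => Cplus (g n) (h n)) F (locally (Cplus lg lh)).
Proof.
  intros Hg Hh. eapply filterlim_comp_2; [exact Hg | exact Hh |].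
  apply (@filterlim_plus C_AbsRing C_NormedModule).
Qed.

Lemma filterlim_Cmult_l {T} (F : (T -> Prop) -> Prop) {FF : Filter F} (c : C) (g : T -> C) l :
  filterlim g F (locally l) -> filterlim (fun n => Cmult c (g n)) F (locally (Cmult c l)).
Proof.
  intros Hg. eapply filterlim_comp; [exact Hg |].
  apply (@filterlim_scal_r C_AbsRing C_NormedModule).
Qed.

Lemma filterlim_Csum_map {A T} (F : (T -> Prop) -> Prop) {FF : Filter F} (l : list A)
  (c : A -> C) (S : A -> T -> C) (L : A -> C) :
  (forall v, filterlim (S v) F (locally (L v))) ->
  filterlim (fun n => Csum (map (fun v => Cmult (c v) (S v n)) l)) F
    (locally (Csum (map (fun v => Cmult (c v) (L v)) l))).
Proof.
  intros H. induction l; simpl.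
  - apply filterlim_const.
  - apply filterlim_Cplus; auto. apply filterlim_Cmult_l; auto.
Qed.

Lemma U_partial_rational_limit (P : list Z) (f : R -> C) (u q : Z) x :
  class_D f -> (0 < q)%Z ->
  filterlim (U_partial P f (IZR u / IZR q) x) eventually (locally (U_rational P f u q x)).
Proof.
  intros HD Hq.
  replace (U_partial P f (IZR u / IZR q) x) with (fun K => Cmult (RtoC (1 / IZR q))
    (Csum (map (fun v => Cmult (Gsum P u v q) (fourier_partial_sum f (x + IZR v / IZR q) K))
               (residues q))))
    by (apply functional_extensionality; intros K; symmetry; apply U_partial_rational_time; auto).
  apply (filterlim_Cmult_l eventually), (filterlim_Csum_map eventually).
  intros v. apply fourier_partial_sum_limit, HD.
Qed.

(** * Piecewise constancy at rational times *)

Definition unit_subdivision (n : nat) (a : nat -> R) : Prop :=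
  a 0%nat = 0 /\ a n = 1 /\ forall i, (i < n)%nat -> a i < a (S i).

Lemma subdivision_gap (a : nat -> R) n y : (forall i, (i < n)%nat -> a i < a (S i)) ->
  a 0%nat < y < a n -> (forall i, (i <= n)%nat -> a i <> y) ->
  exists i, (i < n)%nat /\ a i < y < a (S i).
Proof.
  intros Hm. induction n; intros Hy Hne; [lra|].
  destruct (Rlt_le_dec (a n) y) as [H|H]; [exists n; split; [lia | lra]|].
  destruct (Req_dec (a n) y) as [E|E]; [exfalso; apply (Hne n); auto|].
  destruct IHn as [i [Hi1 Hi2]]; [intros; apply Hm; lia | lra | intros; apply Hne; lia |].
  exists i; split; [lia | auto].
Qed.

Lemma subdivision_point_not_in_gap (a : nat -> R) n i k :
  (forall j, (j < n)%nat -> a j < a (S j)) ->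
  (i < n)%nat -> (k <= n)%nat -> ~ (a i < a k < a (S i)).
Proof.
  intros Hm Hi Hk [H1 H2].
  assert (Hle := subdivision_le a n (fun j Hj => Rlt_le _ _ (Hm j Hj))).
  destruct (le_lt_dec k i).
  - pose proof (Hle k i ltac:(lia) ltac:(lia)). lra.
  - pose proof (Hle (S i) k ltac:(lia) ltac:(lia)). lra.
Qed.

Lemma unit_subdivision_insert n a s : unit_subdivision n a -> 0 < s < 1 ->
  (forall i, (i <= n)%nat -> a i <> s) ->
  exists a', unit_subdivision (S n) a' /\ (exists i, (i <= S n)%nat /\ a' i = s) /\
    forall k, (k <= n)%nat -> exists i, (i <= S n)%nat /\ a' i = a k.
Proof.
  intros [Ha0 [Han Hm]] Hs Hne.
  destruct (subdivision_gap a n s Hm ltac:(lra) Hne) as [i [Hi [Hi1 Hi2]]].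
  exists (fun j => if (j <=? i)%nat then a j else if (j =? S i)%nat then s else a (j - 1)%nat).
  split; [split; [|split]|split].
  - simpl. auto.
  - destruct (Nat.leb_spec (S n) i); [lia|]. destruct (Nat.eqb_spec (S n) (S i)); [lia|].
    replace (S n - 1)%nat with n by lia. auto.
  - intros j Hj.
    destruct (Nat.leb_spec j i); destruct (Nat.leb_spec (S j) i);
      destruct (Nat.eqb_spec j (S i)); destruct (Nat.eqb_spec (S j) (S i)); try lia.
    + apply Hm; lia.
    + assert (j = i) by lia. subst. auto.
    + subst. replace (S (S i) - 1)%nat with (S i) by lia. auto.
    + replace (S j - 1)%nat with (S (j - 1)) by lia. apply Hm; lia.
  - exists (S i). split; [lia|]. destruct (Nat.leb_spec (S i) i); [lia|].
    rewrite Nat.eqb_refl. auto.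
  - intros k Hk. destruct (le_lt_dec k i).
    + exists k. split; [lia|]. destruct (Nat.leb_spec k i); [auto | lia].
    + exists (S k). split; [lia|]. destruct (Nat.leb_spec (S k) i); [lia|].
      destruct (Nat.eqb_spec (S k) (S i)); [lia|]. replace (S k - 1)%nat with k by lia. auto.
Qed.

Lemma unit_subdivision_through (L : list R) : exists n a, unit_subdivision n a /\
  forall s, In s L -> 0 < s < 1 -> exists i, (i <= n)%nat /\ a i = s.
Proof.
  induction L as [|s L [n [a [Ha Hp]]]].
  - exists 1%nat, (fun i => match i with O => 0 | _ => 1 end). split; [|intros s []].
    split; [auto | split; [auto|]]. intros i Hi. assert (i = 0%nat) by lia. subst. lra.
  - destruct (classic (0 < s < 1 /\ forall i, (i <= n)%nat -> a i <> s)) as [[Hs Hne]|Hcase].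
    + destruct (unit_subdivision_insert n a s Ha Hs Hne) as [a' [Ha' [Hs' Hold]]].
      exists (S n), a'. split; auto.
      intros s' [<-|Hin] Hs''; auto.
      destruct (Hp s' Hin Hs'') as [k [Hk <-]]. auto.
    + exists n, a. split; auto.
      intros s' [<-|Hin] Hs'; auto.
      apply NNPP. intros Hno. apply Hcase. split; auto.
      intros i Hi E. apply Hno. exists i. auto.
Qed.

Definition locally_constant_off (L : list R) (g : R -> C) : Prop :=
  forall y, 0 < y < 1 -> ~ In y L ->
    exists eps, 0 < eps /\ forall z, Rabs (z - y) < eps -> g z = g y.

(** A function locally constant on an open interval has zero derivative there, hence is
    constant on it. *)
Lemma piecewise_constant_of_locally_constant_off L g :
  locally_constant_off L g -> piecewise_constant g.
Proof.
  intros HL. destruct (unit_subdivision_through L) as [n [a [[Ha0 [Han Hm]] Hp]]].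
  exists n, a. split; [auto | split; [auto | split; [auto|]]].
  intros i Hi.
  assert (Hle := subdivision_le a n (fun j Hj => Rlt_le _ _ (Hm j Hj))).
  assert (Hder : forall t, a i < t < a (S i) -> @is_derive R_AbsRing C_R_NormedModule g t zero).
  { intros t Ht.
    assert (Ht01 : 0 < t < 1).
    { pose proof (Hle 0%nat i ltac:(lia) ltac:(lia)).
      pose proof (Hle (S i) n ltac:(lia) ltac:(lia)). lra. }
    assert (HnI : ~ In t L).
    { intros Hin. destruct (Hp t Hin Ht01) as [k [Hk1 Hk2]].
      apply (subdivision_point_not_in_gap a n i k Hm Hi Hk1). rewrite Hk2. auto. }
    destruct (HL t Ht01 HnI) as [eps [Heps Hc]].
    apply (@is_derive_ext_loc R_AbsRing C_R_NormedModule (fun _ => g t)).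
    - exists (mkposreal eps Heps). intros z Hz. symmetry. apply Hc.
      exact (proj1 (ball_R _ _ _) Hz).
    - apply (@is_derive_const R_AbsRing C_R_NormedModule). }
  set (mid := (a i + a (S i)) / 2). assert (Hi' := Hm i Hi).
  exists (g mid). intros y Hy.
  destruct (Rtotal_order y mid) as [H|[H|H]].
  - apply (@eq_is_derive C_R_NormedModule g y mid); auto.
    intros t Ht. apply Hder. unfold mid in *; lra.
  - subst; auto.
  - symmetry. apply (@eq_is_derive C_R_NormedModule g mid y); auto.
    intros t Ht. apply Hder. unfold mid in *; lra.
Qed.

Lemma locally_constant_off_plus L1 L2 g1 g2 :
  locally_constant_off L1 g1 -> locally_constant_off L2 g2 ->
  locally_constant_off (L1 ++ L2) (fun y => Cplus (g1 y) (g2 y)).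
Proof.
  intros H1 H2 y Hy Hn.
  destruct (H1 y Hy) as [e1 [He1 Hc1]]; [intros Hin; apply Hn, in_or_app; auto|].
  destruct (H2 y Hy) as [e2 [He2 Hc2]]; [intros Hin; apply Hn, in_or_app; auto|].
  exists (Rmin e1 e2). split; [apply Rmin_glb_lt; auto|].
  intros z Hz. pose proof (Rmin_l e1 e2). pose proof (Rmin_r e1 e2).
  rewrite Hc1, Hc2 by lra. auto.
Qed.

Lemma locally_constant_off_mult_l L g c :
  locally_constant_off L g -> locally_constant_off L (fun y => Cmult c (g y)).
Proof.
  intros H y Hy Hn. destruct (H y Hy Hn) as [eps [Heps Hc]]. exists eps. split; auto.
  intros z Hz. rewrite Hc; auto.
Qed.

Lemma locally_constant_off_translate f s :
  (forall x, f (x + 1) = f x) -> piecewise_constant f -> 0 <= s < 1 ->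
  exists L, locally_constant_off L (fun y => f (y + s)).
Proof.
  intros Hper [n [a [Ha0 [Han [Hm Hc]]]]] Hs.
  exists (map (fun i => a i - s) (seq 0 (S n)) ++ map (fun i => a i + 1 - s) (seq 0 (S n))).
  intros y Hy Hn.
  assert (Hnot : forall c i, (c = 0 \/ c = 1) -> (i <= n)%nat -> a i <> y + s - c).
  { intros c i Hcase Hi E. apply Hn, in_or_app.
    destruct Hcase; subst c; [left | right]; apply in_map_iff; exists i;
      (split; [lra | apply in_seq; lia]). }
  (* [y + s] lies in [(0, 2)]; reduce it to [(0, 1)] by periodicity *)
  assert (Hred : exists c, (c = 0 \/ c = 1) /\ 0 < y + s - c < 1).
  { destruct (Rlt_le_dec (y + s) 1); [exists 0; split; [auto | lra]|].
    destruct (Req_dec (y + s) 1) as [E|E].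
    - exfalso. apply (Hnot 0 n); [auto | auto | lra].
    - exists 1; split; [auto | lra]. }
  destruct Hred as [c [Hcase Hw]].
  assert (Hfc : forall z, f (z + s) = f (z + s - c)).
  { intros z. destruct Hcase; subst c; [f_equal; ring|].
    rewrite <- (Hper (z + s - 1)). f_equal. ring. }
  destruct (subdivision_gap a n (y + s - c) Hm ltac:(lra) (fun i Hi => Hnot c i Hcase Hi))
    as [i [Hi [Hi1 Hi2]]].
  destruct (Hc i Hi) as [v Hv].
  exists (Rmin (y + s - c - a i) (a (S i) - (y + s - c))). split; [apply Rmin_glb_lt; lra|].
  intros z Hz. pose proof (Rmin_l (y + s - c - a i) (a (S i) - (y + s - c))).
  pose proof (Rmin_r (y + s - c - a i) (a (S i) - (y + s - c))). apply Rabs_def2 in Hz.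
  rewrite !Hfc, !Hv; auto; lra.
Qed.

Lemma U_rational_locally_constant_off P f u q : class_D f -> piecewise_constant f ->
  (0 < q)%Z -> exists L, locally_constant_off L (U_rational P f u q).
Proof.
  intros [_ [Hper _]] Hpc Hq.
  assert (Hsum : forall l : list Z, (forall v, In v l -> 0 <= IZR v / IZR q < 1) ->
    exists L, locally_constant_off L (fun x => Csum (map (fun v =>
      Cmult (Gsum P u v q) (f (x + IZR v / IZR q))) l))).
  { induction l as [|v l IH]; intros Hl.
    - exists nil. intros y _ _. exists 1. split; [lra | auto].
    - destruct IH as [L1 HL1]; [intros; apply Hl; right; auto|].
      destruct (locally_constant_off_translate f (IZR v / IZR q) Hper Hpc) as [L2 HL2];
        [apply Hl; left; auto|].
      exists (L2 ++ L1).
      apply (locally_constant_off_plus L2 L1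
               (fun x => Cmult (Gsum P u v q) (f (x + IZR v / IZR q))));
        [apply locally_constant_off_mult_l|]; auto. }
  destruct (Hsum (residues q)) as [L HL].
  - intros v Hv. unfold residues in Hv.
    apply in_map_iff in Hv. destruct Hv as [j [<- Hj]]. apply in_seq in Hj.
    assert (Hq' : 0 < IZR q) by (apply IZR_lt; lia).
    assert (0 <= IZR (Z.of_nat j)) by (apply IZR_le; lia).
    assert (IZR (Z.of_nat j) < IZR q) by (apply IZR_lt; lia).
    split; [apply Rdiv_le_0_compat; lra|].
    apply Rmult_lt_reg_r with (IZR q); auto. unfold Rdiv.
    rewrite Rmult_assoc, Rinv_l by lra. lra.
  - exists L. apply locally_constant_off_mult_l, HL.
Qed.

Theorem theorem1p4 (P : list Z) (f : R -> C) :
  class_D f ->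
  (forall (u q : Z), (0 < q)%Z -> Z.gcd u q = 1%Z ->
     forall x : R,
       filterlim (U_partial P f (IZR u / IZR q) x) eventually
         (locally (U_rational P f u q x))) /\
  (piecewise_constant f ->
     forall (u q : Z), (0 < q)%Z -> Z.gcd u q = 1%Z ->
       exists g : R -> C, piecewise_constant g /\
         forall x : R,
           filterlim (U_partial P f (IZR u / IZR q) x) eventually
             (locally (g x))).
Proof.
  intros HD. split.
  - intros u q Hq _ x. apply U_partial_rational_limit; auto.
  - intros Hpc u q Hq _. exists (U_rational P f u q). split.
    + destruct (U_rational_locally_constant_off P f u q HD Hpc Hq) as [L HL].
      apply (piecewise_constant_of_locally_constant_off L), HL.
    + intros x. apply U_partial_rational_limit; auto.
Qed.
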